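(* Let $F:\mathbb{R}^n\to\mathbb{R}^n$ be semilinear, monotone and homogeneous. Then there exists a game graph $\vec{\mathcal{G}}$ with Min vertex set $[n]$ satisfying assumptions (a)–(c) such that $F$ is the operator encoded by $\vec{\mathcal{G}}$.
   Context: Game graph: a directed graph $\vec{\mathcal{G}}=(V,E)$ with $V=V_{\mathrm{Min}}\uplus V_{\mathrm{Rand}}\uplus V_{\mathrm{Max}}$, $V_{\mathrm{Min}}=[n]$ and $V_{\mathrm{Max}}=[m]$ nonempty, every vertex having at least one outgoing edge; $\mathrm{Out}(v)$ is the set of outgoing edges of $v$. Each edge $e$ with Min or Max tail carries a real $r_e$; each edge $e$ with Random tail carries a rational $q_e>0$, summing to $1$ over the outgoing edges of each Random vertex. Assumptions: (a) every path between two Min vertices contains a Max vertex; (b) every path between two Max vertices contains a Min vertex; (c) from every Random vertex there is a path to a Min or Max vertex. In the Markov chain on $V$ where Min and Max vertices are absorbing and a Random vertex $v$ moves to $w$ with probability $q_{(v,w)}$, $p^e_v$ is the probability that the chain started at the head of edge $e$ is absorbed at $v\in V_{\mathrm{Min}}\cup V_{\mathrm{Max}}$. The operator encoded by $\vec{\mathcal{G}}$ is $F_v(x)=\min_{e\in\mathrm{Out}(v)}\big(r_e+\sum_{w\in[m]}p^e_w\max_{e'\in\mathrm{Out}(w)}(r_{e'}+\sum_{u\in[n]}p^{e'}_u x_u)\big)$, $v\in[n]$. Semilinear: graph of $F$ is a finite union of sets $\{z: \langle A_i,z\rangle>b_i,\ \langle A_j,z\rangle=b_j\}$ with rational $A$,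 real $b$. Monotone: $x\le y\Rightarrow F(x)\le F(y)$; homogeneous: $F(\lambda+x)=\lambda+F(x)$ for $\lambda\in\mathbb{R}$. *)

From Stdlib Require Import Reals Lra List QArith Qreals.
Open Scope R_scope.

(** Vectors of R^n are represented as functions [nat -> R]; only the
    coordinates [i < n] are meaningful. *)

Inductive vtx : Type := VMin (i : nat) | VRand (j : nat) | VMax (j : nat).

Definition vtx_eqb (a b : vtx) : bool :=
  match a, b with
  | VMin i, VMin j => Nat.eqb i j
  | VRand i, VRand j => Nat.eqb i j
  | VMax i, VMax j => Nat.eqb i j
  | _, _ => false
  end.

Definition is_min (v : vtx) : Prop := match v with VMin _ => True | _ => False end.
Definition is_max (v : vtx) : Prop := match v with VMax _ => True | _ => False end.
Definition is_rand (v : vtx) : Prop := match v with VRand _ => True | _ => False end.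

(** A game graph: vertex counts (n Min, nR Random, m Max), the edge set E
    (a duplicate-free list of pairs), real weights [r] (used on edges with
    Min or Max tail) and rational probabilities [q] (used on edges with
    Random tail). *)
Record game := mkGame {
  g_n : nat;
  g_nR : nat;
  g_m : nat;
  g_edges : list (vtx * vtx);
  g_r : vtx * vtx -> R;
  g_q : vtx * vtx -> Q
}.

Definition valid_vtx (G : game) (v : vtx) : Prop :=
  match v with
  | VMin i => (i < g_n G)%nat
  | VRand j => (j < g_nR G)%nat
  | VMax j => (j < g_m G)%nat
  end.

Definition out (G : game) (v : vtx) : list (vtx * vtx) :=
  filter (fun e => vtx_eqb (fst e) v) (g_edges G).

Definition sumR (l : list R) : R := fold_right Rplus 0 l.
Definition sumQ (l : list Q) : Q := fold_right Qplus 0%Q l.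
Definition sum_range (k : nat) (f : nat -> R) : R := sumR (map f (seq 0 k)).

Definition minl (l : list R) : R :=
  match l with nil => 0 | a :: t => fold_right Rmin a t end.
Definition maxl (l : list R) : R :=
  match l with nil => 0 | a :: t => fold_right Rmax a t end.

Fixpoint walk (G : game) (v : vtx) (l : list vtx) : Prop :=
  match l with
  | nil => True
  | w :: l' => In (v, w) (g_edges G) /\ walk G w l'
  end.

Definition game_ok (G : game) : Prop :=
  (0 < g_n G)%nat /\ (0 < g_m G)%nat /\
  NoDup (g_edges G) /\
  (forall e, In e (g_edges G) -> valid_vtx G (fst e) /\ valid_vtx G (snd e)) /\
  (forall v, valid_vtx G v -> out G v <> nil) /\
  (forall e, In e (g_edges G) -> is_rand (fst e) -> Qlt 0 (g_q G e)) /\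
  (forall j, (j < g_nR G)%nat ->
     Qeq (sumQ (map (g_q G) (out G (VRand j)))) 1) /\
  (* (a) every path between two Min vertices contains a Max vertex *)
  (forall u l, is_min u -> walk G u l -> l <> nil -> is_min (last l u) ->
     exists x, In x l /\ is_max x) /\
  (* (b) every path between two Max vertices contains a Min vertex *)
  (forall u l, is_max u -> walk G u l -> l <> nil -> is_max (last l u) ->
     exists x, In x l /\ is_min x) /\
  (* (c) from every Random vertex there is a path to a Min or Max vertex *)
  (forall j, (j < g_nR G)%nat -> exists l, walk G (VRand j) l /\
     (is_min (last l (VRand j)) \/ is_max (last l (VRand j)))).

(** Markov chain on V: Min and Max vertices are absorbing, a Random vertex
    v moves to w with probability q_(v,w).  [nstep G k s t] is the
    probability to be at t after k steps when starting at s. *)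
Fixpoint nstep (G : game) (k : nat) (s t : vtx) : R :=
  match k with
  | O => if vtx_eqb s t then 1 else 0
  | S k' =>
      match s with
      | VRand _ => sumR (map (fun e => Q2R (g_q G e) * nstep G k' (snd e) t) (out G s))
      | _ => if vtx_eqb s t then 1 else 0
      end
  end.

(** [p] gives the absorption probabilities: for every edge e = (v,h) and
    every absorbing vertex t, p h t = lim_k P^k(h,t) = probability that the
    chain started at the head h of e is absorbed at t. *)
Definition absorption_probs (G : game) (p : vtx -> vtx -> R) : Prop :=
  forall e t, In e (g_edges G) -> valid_vtx G t -> (is_min t \/ is_max t) ->
    Un_cv (fun k => nstep G k (snd e) t) (p (snd e) t).

Definition encoded_op (G : game) (p : vtx -> vtx -> R) (x : nat -> R) (v : nat) : R :=
  minl (map (fun e =>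
     g_r G e + sum_range (g_m G) (fun w =>
        p (snd e) (VMax w) *
        maxl (map (fun e' =>
                g_r G e' + sum_range (g_n G) (fun u => p (snd e') (VMin u) * x u))
             (out G (VMax w)))))
   (out G (VMin v))).

(** F is a well-defined map R^n -> R^n: its first n output coordinates
    depend only on the first n input coordinates. *)
Definition is_map_Rn (n : nat) (F : (nat -> R) -> (nat -> R)) : Prop :=
  forall x y, (forall i, (i < n)%nat -> x i = y i) ->
    forall i, (i < n)%nat -> F x i = F y i.

Definition monotone (n : nat) (F : (nat -> R) -> (nat -> R)) : Prop :=
  forall x y, (forall i, (i < n)%nat -> x i <= y i) ->
    forall i, (i < n)%nat -> F x i <= F y i.

Definition homogeneous (n : nat) (F : (nat -> R) -> (nat -> R)) : Prop :=
  forall (lam : R) x i, (i < n)%nat -> F (fun j => lam + x j) i = lam + F x i.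

(** A linear constraint on z = (x, y) in R^n x R^n = R^{2n}:
    <A, z> > b  (strict = true)  or  <A, z> = b  (strict = false),
    with A rational and b real. *)
Record constr := mkConstr { c_A : nat -> Q; c_b : R; c_strict : bool }.

Definition dotz (n : nat) (A : nat -> Q) (x y : nat -> R) : R :=
  sum_range n (fun i => Q2R (A i) * x i) + sum_range n (fun i => Q2R (A (n + i)%nat) * y i).

Definition sat_constr (n : nat) (c : constr) (x y : nat -> R) : Prop :=
  if c_strict c then dotz n (c_A c) x y > c_b c else dotz n (c_A c) x y = c_b c.

Definition semilinear (n : nat) (F : (nat -> R) -> (nat -> R)) : Prop :=
  exists S : list (list constr),
    forall x y : nat -> R,
      (forall i, (i < n)%nat -> y i = F x i) <->
      exists C, In C S /\ forall c, In c C -> sat_constr n c x y.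

(* Monotone homogeneous maps are nonexpansive for the sup-norm. On a small ball around a
   generic point no constraint of the finitely many pieces of the semilinear graph changes
   sign, so one piece holds on the whole ball; there the graph is an affine subspace, which
   forces F x = c + P x with P solving the rational equality constraints of the piece, hence
   with P rational, and monotonicity and homogeneity make P stochastic. This yields finitely
   many maps g_1, ..., g_K such that F agrees pointwise with one of them. Along a segment
   [a, x], F_v is piecewise affine with pieces among the g_{j,v}, and a sweep argument gives a
   j with g_{j,v}(a) <= F_v(a) and F_v(x) <= g_{j,v}(x). Consequently
   F_v = min_J max_{j in J} g_{j,v}, where J ranges over the sets with F_v <= max_J g_{j,v}
   everywhere, the minimum at a being attained by J = {j | g_{j,v}(a) <= F_v(a)}. This
   min-max formula is read as a game: Min at v picks J (a Max vertex), Max picks j in J and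
   earns the constant of g_{j,v} (a Random vertex), which moves to u with probability P_{j,vu}. *)

From Stdlib Require Import Reals List QArith Qreals.
From Stdlib Require Import Lra Lia Permutation ClassicalEpsilon Classical.
From Stdlib Require IndefiniteDescription.
Open Scope R_scope.

(** * Finite sums and extrema *)

Lemma sumR_app l1 l2 : sumR (l1 ++ l2) = sumR l1 + sumR l2.
Proof. induction l1 as [|a l1 IH]; simpl; [lra | rewrite IH; lra]. Qed.

Lemma sumR_perm l l' : Permutation l l' -> sumR l = sumR l'.
Proof. induction 1; simpl; lra. Qed.

Lemma sumR_map_filter_zero {A} (g : A -> R) (b : A -> bool) l :
  (forall a, In a l -> b a = false -> g a = 0) ->
  sumR (map g (filter b l)) = sumR (map g l).
Proof.
  induction l as [|a l IH]; intros H; simpl; auto.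
  destruct (b a) eqn:E; simpl; rewrite IH by (intros; apply H; simpl; auto); [reflexivity|].
  rewrite (H a (or_introl eq_refl) E). ring.
Qed.

Lemma sumQ_map_Q2R {A} (f : A -> Q) l :
  Q2R (sumQ (map f l)) = sumR (map (fun a => Q2R (f a)) l).
Proof.
  induction l as [|a l IH]; simpl.
  - unfold Q2R; simpl; lra.
  - rewrite Q2R_plus, IH. reflexivity.
Qed.

Lemma sum_range_S k f : sum_range (S k) f = sum_range k f + f k.
Proof. unfold sum_range. rewrite seq_S, map_app, sumR_app. simpl. lra. Qed.

Lemma sum_range_ext k f g :
  (forall i, (i < k)%nat -> f i = g i) -> sum_range k f = sum_range k g.
Proof. induction k; intros H; [reflexivity|]. rewrite !sum_range_S, IHk, H; auto. Qed.

Lemma sum_range_const0 k : sum_range k (fun _ => 0) = 0.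
Proof. induction k; [reflexivity|]. rewrite sum_range_S, IHk. lra. Qed.

Lemma sum_range_zero k f : (forall i, (i < k)%nat -> f i = 0) -> sum_range k f = 0.
Proof. intros H. rewrite (sum_range_ext k f (fun _ => 0)) by auto. apply sum_range_const0. Qed.

Lemma sum_range_plus k f g :
  sum_range k (fun i => f i + g i) = sum_range k f + sum_range k g.
Proof. induction k; [unfold sum_range; simpl; lra|]. rewrite !sum_range_S, IHk. lra. Qed.

Lemma sum_range_scal k c f : sum_range k (fun i => c * f i) = c * sum_range k f.
Proof. induction k; [unfold sum_range; simpl; lra|]. rewrite !sum_range_S, IHk. lra. Qed.

Lemma sum_range_minus k f g :
  sum_range k (fun i => f i - g i) = sum_range k f - sum_range k g.
Proof. induction k; [unfold sum_range; simpl; lra|]. rewrite !sum_range_S, IHk. lra. Qed.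

Lemma sum_range_le k f g :
  (forall i, (i < k)%nat -> f i <= g i) -> sum_range k f <= sum_range k g.
Proof.
  induction k; intros H; [unfold sum_range; simpl; lra|]. rewrite !sum_range_S.
  assert (sum_range k f <= sum_range k g) by (apply IHk; auto).
  specialize (H k ltac:(lia)). lra.
Qed.

Lemma sum_range_nonneg k f : (forall i, (i < k)%nat -> 0 <= f i) -> 0 <= sum_range k f.
Proof. intros H. rewrite <- (sum_range_const0 k). apply sum_range_le; auto. Qed.

Lemma sum_range_abs k f : Rabs (sum_range k f) <= sum_range k (fun i => Rabs (f i)).
Proof.
  induction k; [unfold sum_range; simpl; rewrite Rabs_R0; lra|]. rewrite !sum_range_S.
  eapply Rle_trans; [apply Rabs_triang|]. lra.
Qed.

Lemma sum_range_exchange k m f :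
  sum_range k (fun i => sum_range m (fun j => f i j)) =
  sum_range m (fun j => sum_range k (fun i => f i j)).
Proof.
  induction k.
  - symmetry. apply sum_range_zero. reflexivity.
  - rewrite sum_range_S, IHk, <- sum_range_plus. apply sum_range_ext.
    intros. rewrite sum_range_S. lra.
Qed.

Definition delta (i u : nat) : R := if Nat.eqb i u then 1 else 0.

Lemma sum_range_delta k u f : (u < k)%nat -> sum_range k (fun i => delta i u * f i) = f u.
Proof.
  unfold delta. induction k; intros H; [lia|]. rewrite sum_range_S.
  destruct (Nat.eq_dec u k) as [->|Hne].
  - rewrite Nat.eqb_refl, sum_range_zero; [lra|].
    intros i Hi. destruct (Nat.eqb_spec i k); [lia|lra].
  - rewrite IHk by lia. destruct (Nat.eqb_spec k u); [lia|lra].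
Qed.

Lemma term_le_sum_range k f u :
  (u < k)%nat -> (forall i, (i < k)%nat -> 0 <= f i) -> f u <= sum_range k f.
Proof.
  intros Hu H. rewrite <- (sum_range_delta k u f Hu). apply sum_range_le.
  intros i Hi. specialize (H i Hi). unfold delta. destruct (Nat.eqb i u); lra.
Qed.

Lemma sum_range_lipschitz k (a x y : nat -> R) d :
  (forall i, (i < k)%nat -> Rabs (x i - y i) <= d) ->
  Rabs (sum_range k (fun i => a i * x i) - sum_range k (fun i => a i * y i))
  <= sum_range k (fun i => Rabs (a i)) * d.
Proof.
  intros H. rewrite <- sum_range_minus. eapply Rle_trans; [apply sum_range_abs|].
  rewrite Rmult_comm, <- sum_range_scal. apply sum_range_le. intros i Hi.
  replace (a i * x i - a i * y i) with (a i * (x i - y i)) by ring. rewrite Rabs_mult.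
  specialize (H i Hi). pose proof (Rabs_pos (a i)). nra.
Qed.

Lemma minl_le l y : In y l -> minl l <= y.
Proof.
  destruct l as [|a t]; [intros []|]. simpl.
  assert (G : fold_right Rmin a t <= a /\ forall y, In y t -> fold_right Rmin a t <= y).
  { induction t as [|b t [IH1 IH2]]; simpl; split; [lra|intros _ []| |].
    - eapply Rle_trans; [apply Rmin_r|]; auto.
    - intros z [<-|Hz]; [apply Rmin_l|]. eapply Rle_trans; [apply Rmin_r|]; auto. }
  intros [<-|H]; [apply (proj1 G)|apply (proj2 G); auto].
Qed.

Lemma minl_in l : l <> nil -> In (minl l) l.
Proof.
  destruct l as [|a t]; [congruence|]. intros _. unfold minl.
  induction t as [|b t IH]; [left; reflexivity|]. simpl fold_right.
  destruct (Rle_dec b (fold_right Rmin a t)).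
  - rewrite Rmin_left by auto. right; left; auto.
  - rewrite Rmin_right by lra. destruct IH as [H|H]; [left|right; right]; auto.
Qed.

Lemma maxl_ge l y : In y l -> y <= maxl l.
Proof.
  destruct l as [|a t]; [intros []|]. simpl.
  assert (G : a <= fold_right Rmax a t /\ forall y, In y t -> y <= fold_right Rmax a t).
  { induction t as [|b t [IH1 IH2]]; simpl; split; [lra|intros _ []| |].
    - eapply Rle_trans; [|apply Rmax_r]; auto.
    - intros z [<-|Hz]; [apply Rmax_l|]. eapply Rle_trans; [|apply Rmax_r]; auto. }
  intros [<-|H]; [apply (proj1 G)|apply (proj2 G); auto].
Qed.

Lemma maxl_in l : l <> nil -> In (maxl l) l.
Proof.
  destruct l as [|a t]; [congruence|]. intros _. unfold maxl.
  induction t as [|b t IH]; [left; reflexivity|]. simpl fold_right.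
  destruct (Rle_dec b (fold_right Rmax a t)).
  - rewrite Rmax_right by auto. destruct IH as [H|H]; [left|right; right]; auto.
  - rewrite Rmax_left by lra. right; left; auto.
Qed.

Lemma minl_eq l y : In y l -> (forall z, In z l -> y <= z) -> minl l = y.
Proof.
  intros Hy Hlow. apply Rle_antisym; [apply minl_le; auto|].
  apply Hlow, minl_in. intros ->. destruct Hy.
Qed.

Lemma finite_common_radius {A} (l : list A) (P : A -> R -> Prop) :
  (forall a e e', P a e -> 0 < e' <= e -> P a e') ->
  (forall a, In a l -> exists e, 0 < e /\ P a e) ->
  exists e, 0 < e /\ forall a, In a l -> P a e.
Proof.
  intros Hmono. induction l as [|a l IH]; intros H.
  - exists 1. split; [lra|]. intros a [].
  - destruct (H a (or_introl eq_refl)) as [e1 [He1 P1]].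
    destruct IH as [e2 [He2 P2]]; [intros b Hb; apply H; right; auto|].
    assert (Hmin : 0 < Rmin e1 e2) by (apply Rmin_glb_lt; auto).
    exists (Rmin e1 e2). split; [auto|].
    intros b [<-|Hb]; eapply Hmono; eauto; split; auto; [apply Rmin_l|apply Rmin_r].
Qed.

Lemma pos_affine_near (a b : R) :
  0 < a -> exists t, 0 < t /\ forall s, 0 <= s <= t -> 0 < a + s * b.
Proof.
  intros Ha. exists (a / (Rabs b + 1)). pose proof (Rabs_pos b).
  assert (Ht : 0 < a / (Rabs b + 1)) by (apply Rdiv_lt_0_compat; lra).
  split; [auto|]. intros s Hs.
  assert (s * Rabs b < a).
  { apply Rle_lt_trans with (a / (Rabs b + 1) * Rabs b); [nra|].
    apply Rlt_le_trans with (a / (Rabs b + 1) * (Rabs b + 1)); [nra|].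
    right. field. lra. }
  pose proof (Rle_abs (- b)). rewrite Rabs_Ropp in *. nra.
Qed.

(** * Rational solutions of rational linear systems *)

Lemma Q2R_0 : Q2R 0 = 0.
Proof. unfold Q2R; simpl; lra. Qed.

Lemma Q2R_neq_0 q : ~ (q == 0)%Q -> Q2R q <> 0.
Proof. intros Hq Hc. apply Hq, eqR_Qeq. rewrite Hc, Q2R_0. reflexivity. Qed.

Definition lin_residual (N : nat) (e : (nat -> Q) * Q) (w : nat -> R) : R :=
  sum_range N (fun i => Q2R (fst e i) * w i) - Q2R (snd e).

Lemma lin_residual_ext N e w w' :
  (forall i, (i < N)%nat -> w i = w' i) -> lin_residual N e w = lin_residual N e w'.
Proof.
  intros H. unfold lin_residual. f_equal. apply sum_range_ext. intros i Hi. rewrite H; auto.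
Qed.

(* Gaussian elimination of the last unknown [N] using the pivot equation [p]. *)
Definition eliminate (N : nat) (p e : (nat -> Q) * Q) : (nat -> Q) * Q :=
  ((fun i => fst e i - fst e N * fst p i / fst p N)%Q, (snd e - fst e N * snd p / fst p N)%Q).

Lemma lin_residual_eliminate N p e w : ~ (fst p N == 0)%Q ->
  lin_residual N (eliminate N p e) w =
  lin_residual (S N) e w - Q2R (fst e N) / Q2R (fst p N) * lin_residual (S N) p w.
Proof.
  intros Hp. pose proof (Q2R_neq_0 _ Hp) as Hp'. unfold lin_residual, eliminate. simpl.
  rewrite !sum_range_S, Q2R_minus, Q2R_div, Q2R_mult by auto.
  rewrite (sum_range_ext N _ (fun i => Q2R (fst e i) * w i
             - Q2R (fst e N) / Q2R (fst p N) * (Q2R (fst p i) * w i))).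
  - rewrite sum_range_minus, sum_range_scal. field. auto.
  - intros i _. rewrite Q2R_minus, Q2R_div, Q2R_mult by auto. field. auto.
Qed.

Lemma back_substitute N p (wq : nat -> Q) : ~ (fst p N == 0)%Q ->
  exists wq' : nat -> Q, (forall i, (i < N)%nat -> wq' i = wq i) /\
    lin_residual (S N) p (fun i => Q2R (wq' i)) = 0.
Proof.
  intros Hpiv.
  set (s0 := sumQ (map (fun i => fst p i * wq i)%Q (seq 0 N))).
  assert (Hs0 : Q2R s0 = sum_range N (fun i => Q2R (fst p i) * Q2R (wq i))).
  { unfold s0. rewrite sumQ_map_Q2R. unfold sum_range. f_equal.
    apply map_ext. intros. apply Q2R_mult. }
  exists (fun i => if Nat.eqb i N then ((snd p - s0) / fst p N)%Q else wq i). split.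
  - intros i Hi. destruct (Nat.eqb_spec i N); [lia|reflexivity].
  - unfold lin_residual. rewrite sum_range_S, Nat.eqb_refl, Q2R_div, Q2R_minus by auto.
    rewrite (sum_range_ext N _ (fun i => Q2R (fst p i) * Q2R (wq i))).
    + rewrite <- Hs0. field. apply Q2R_neq_0; auto.
    + intros i Hi. destruct (Nat.eqb_spec i N); [lia|reflexivity].
Qed.

Lemma rational_solution N : forall (eqs : list ((nat -> Q) * Q)) (w : nat -> R),
  (forall e, In e eqs -> lin_residual N e w = 0) ->
  exists wq : nat -> Q, forall e, In e eqs -> lin_residual N e (fun i => Q2R (wq i)) = 0.
Proof.
  induction N as [|N IH]; intros eqs w Hw.
  { exists (fun _ => 0%Q). intros e He. rewrite <- (Hw e He). reflexivity. }
  destruct (classic (exists p, In p eqs /\ ~ (fst p N == 0)%Q)) as [[p [Hp Hpiv]]|Hnone].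
  - destruct (IH (map (eliminate N p) eqs) w) as [wq Hwq].
    { intros e' He'. apply in_map_iff in He' as [e [<- He]].
      rewrite lin_residual_eliminate, (Hw e He), (Hw p Hp) by auto. ring. }
    destruct (back_substitute N p wq Hpiv) as [wq' [Hagree Hpivot]].
    exists wq'. intros e He.
    assert (Hrel := lin_residual_eliminate N p e (fun i => Q2R (wq' i)) Hpiv).
    rewrite Hpivot, (lin_residual_ext N _ _ (fun i => Q2R (wq i))), Hwq in Hrel
      by (auto using in_map; intros i Hi; rewrite Hagree; auto).
    lra.
  - assert (Hlast : forall e v, In e eqs -> lin_residual (S N) e v = lin_residual N e v).
    { intros e v He. unfold lin_residual. rewrite sum_range_S.
      destruct (classic (fst e N == 0)%Q) as [H|H]; [|exfalso; eauto].
      rewrite (Qeq_eqR _ _ H), Q2R_0. ring. }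
    destruct (IH eqs w) as [wq Hwq]; [intros e He; rewrite <- Hlast; auto|].
    exists wq. intros e He. rewrite Hlast; auto.
Qed.

(** * Linear forms on the graph space *)

Lemma monotone_homogeneous_nonexpansive n F : monotone n F -> homogeneous n F ->
  forall x y d, (forall u, (u < n)%nat -> Rabs (x u - y u) <= d) ->
  forall v, (v < n)%nat -> Rabs (F x v - F y v) <= d.
Proof.
  intros Hm Hh x y d Hd v Hv.
  assert (Hshift : forall x y, (forall u, (u < n)%nat -> Rabs (x u - y u) <= d) -> F x v <= d + F y v).
  { intros x' y' Hd'. rewrite <- (Hh d y' v Hv). apply Hm; auto.
    intros i Hi. specialize (Hd' i Hi). pose proof (Rle_abs (x' i - y' i)). lra. }
  pose proof (Hshift x y Hd).
  pose proof (Hshift y x ltac:(intros u Hu; rewrite Rabs_minus_sym; auto)).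
  apply Rabs_le. lra.
Qed.

Lemma dotz_ext n A x y x' y' :
  (forall i, (i < n)%nat -> x i = x' i) -> (forall i, (i < n)%nat -> y i = y' i) ->
  dotz n A x y = dotz n A x' y'.
Proof.
  intros H1 H2. unfold dotz. f_equal; apply sum_range_ext; intros i Hi; rewrite ?H1, ?H2; auto.
Qed.

Lemma dotz_lin n A a b x y x' y' :
  dotz n A (fun i => a * x i + b * x' i) (fun i => a * y i + b * y' i) =
  a * dotz n A x y + b * dotz n A x' y'.
Proof.
  unfold dotz.
  rewrite (sum_range_ext n _ (fun i => a * (Q2R (A i) * x i) + b * (Q2R (A i) * x' i))) by (intros; ring).
  rewrite (sum_range_ext n (fun i => Q2R (A (n + i)%nat) * _)
     (fun i => a * (Q2R (A (n + i)%nat) * y i) + b * (Q2R (A (n + i)%nat) * y' i))) by (intros; ring).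
  rewrite !sum_range_plus, !sum_range_scal. ring.
Qed.

Lemma dotz_scal n A t x y : dotz n A (fun i => t * x i) (fun i => t * y i) = t * dotz n A x y.
Proof.
  transitivity (t * dotz n A x y + 0 * dotz n A x y); [|ring].
  rewrite <- dotz_lin. apply dotz_ext; intros; ring.
Qed.

Lemma dotz_sub n A x y x' y' :
  dotz n A x y - dotz n A x' y' = dotz n A (fun i => x i - x' i) (fun i => y i - y' i).
Proof.
  transitivity (1 * dotz n A x y + (-1) * dotz n A x' y'); [ring|].
  rewrite <- dotz_lin. apply dotz_ext; intros; ring.
Qed.

Lemma dotz_shift_y n A x y t w :
  dotz n A x (fun i => y i + t * w i) = dotz n A x y + t * dotz n A (fun _ => 0) w.
Proof.
  transitivity (1 * dotz n A x y + t * dotz n A (fun _ => 0) w); [|ring].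
  rewrite <- dotz_lin. apply dotz_ext; intros; ring.
Qed.

Definition coef_norm (n : nat) (A : nat -> Q) : R :=
  sum_range n (fun i => Rabs (Q2R (A i))) + sum_range n (fun i => Rabs (Q2R (A (n + i)%nat))).

Lemma coef_norm_nonneg n A : 0 <= coef_norm n A.
Proof.
  unfold coef_norm.
  pose proof (sum_range_nonneg n (fun i => Rabs (Q2R (A i))) (fun i _ => Rabs_pos _)).
  pose proof (sum_range_nonneg n (fun i => Rabs (Q2R (A (n + i)%nat))) (fun i _ => Rabs_pos _)).
  lra.
Qed.

Lemma dotz_lipschitz n A x y x' y' d :
  (forall i, (i < n)%nat -> Rabs (x i - x' i) <= d) ->
  (forall i, (i < n)%nat -> Rabs (y i - y' i) <= d) ->
  Rabs (dotz n A x y - dotz n A x' y') <= coef_norm n A * d.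
Proof.
  intros H1 H2. unfold dotz, coef_norm.
  pose proof (sum_range_lipschitz n (fun i => Q2R (A i)) x x' d H1).
  pose proof (sum_range_lipschitz n (fun i => Q2R (A (n + i)%nat)) y y' d H2).
  match goal with |- Rabs (?a + ?b - (?c + ?d)) <= _ =>
    replace (a + b - (c + d)) with ((a - c) + (b - d)) by ring end.
  eapply Rle_trans; [apply Rabs_triang|]. lra.
Qed.

Definition ball (n : nat) (x0 : nat -> R) (r : R) (x : nat -> R) : Prop :=
  forall u, (u < n)%nat -> Rabs (x u - x0 u) < r.

Lemma ball_center n x0 r : 0 < r -> ball n x0 r x0.
Proof. intros Hr u _. rewrite Rminus_diag, Rabs_R0. auto. Qed.

Lemma ball_open n x0 r x' :
  ball n x0 r x' -> exists e, 0 < e /\ forall x, ball n x' e x -> ball n x0 r x.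
Proof.
  intros Hx.
  destruct (finite_common_radius (seq 0 n)
              (fun u e => (u < n)%nat -> Rabs (x' u - x0 u) + e <= r)) as [e [He Hp]].
  { intros u e e' H [H1 H2] Hu. specialize (H Hu). lra. }
  { intros u Hu. apply in_seq in Hu. exists (r - Rabs (x' u - x0 u)).
    specialize (Hx u ltac:(lia)). split; [lra|]. intros; lra. }
  exists e. split; auto. intros x Hb u Hu.
  specialize (Hb u Hu). specialize (Hp u ltac:(apply in_seq; lia) Hu).
  replace (x u - x0 u) with ((x u - x' u) + (x' u - x0 u)) by ring.
  eapply Rle_lt_trans; [apply Rabs_triang|]. lra.
Qed.

(** * Affine pieces of a semilinear map *)

Record affine_map := mkAffine { aff_const : nat -> R; aff_mat : nat -> nat -> Q }.

Definition aff_eval (n : nat) (g : affine_map) (x : nat -> R) (v : nat) : R :=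
  aff_const g v + sum_range n (fun u => Q2R (aff_mat g v u) * x u).

Definition stochastic (n : nat) (g : affine_map) : Prop :=
  forall v, (v < n)%nat -> (forall u, (u < n)%nat -> 0 <= Q2R (aff_mat g v u)) /\
    sum_range n (fun u => Q2R (aff_mat g v u)) = 1.

Lemma aff_eval_sub n g x y v :
  aff_eval n g x v - aff_eval n g y v = sum_range n (fun u => Q2R (aff_mat g v u) * (x u - y u)).
Proof.
  unfold aff_eval.
  rewrite (sum_range_ext n (fun u => Q2R (aff_mat g v u) * (x u - y u)) (fun u => Q2R (aff_mat g v u) * x u
                                                 - Q2R (aff_mat g v u) * y u)) by (intros; ring).
  rewrite sum_range_minus. ring.
Qed.

Lemma aff_eval_lipschitz n g x y v d :
  (forall u, (u < n)%nat -> Rabs (x u - y u) <= d) ->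
  Rabs (aff_eval n g x v - aff_eval n g y v)
  <= sum_range n (fun u => Rabs (Q2R (aff_mat g v u))) * d.
Proof.
  intros H. unfold aff_eval.
  match goal with |- Rabs (?c + ?a - (?c + ?b)) <= _ => replace (c + a - (c + b)) with (a - b) by ring end.
  apply sum_range_lipschitz; auto.
Qed.

Definition unit_vec (u : nat) : nat -> R := fun i => delta i u.

Lemma ball_step_unit_vec n x1 r u : 0 < r -> ball n x1 r (fun i => x1 i + r / 2 * unit_vec u i).
Proof.
  intros Hr i Hi. unfold unit_vec, delta.
  replace (x1 i + r / 2 * (if Nat.eqb i u then 1 else 0) - x1 i)
    with (r / 2 * (if Nat.eqb i u then 1 else 0)) by ring.
  destruct (Nat.eqb i u); rewrite ?Rmult_1_r, ?Rmult_0_r, ?Rabs_R0; [rewrite Rabs_right|]; lra.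
Qed.

Lemma ball_step_diag n x1 r : 0 < r -> ball n x1 r (fun i => r / 2 + x1 i).
Proof. intros Hr i Hi. replace (r / 2 + x1 i - x1 i) with (r / 2) by ring. rewrite Rabs_right; lra. Qed.

Lemma affine_on_ball_stochastic n F g x1 r :
  monotone n F -> homogeneous n F -> 0 < r ->
  (forall x, ball n x1 r x -> forall v, (v < n)%nat -> F x v = aff_eval n g x v) ->
  stochastic n g.
Proof.
  intros Hm Hh Hr Hg v Hv.
  assert (Hdiff : forall x, ball n x1 r x -> F x v - F x1 v =
                    sum_range n (fun u => Q2R (aff_mat g v u) * (x u - x1 u))).
  { intros x Hx. rewrite (Hg x Hx v Hv), (Hg x1 (ball_center n x1 r Hr) v Hv). apply aff_eval_sub. }
  split.
  - intros u Hu. pose proof (Hdiff _ (ball_step_unit_vec n x1 r u Hr)) as E.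
    rewrite (sum_range_ext n _ (fun i => delta i u * (r / 2 * Q2R (aff_mat g v i)))) in E
      by (intros; unfold unit_vec; ring).
    rewrite sum_range_delta in E by auto.
    assert (F x1 v <= F (fun i => x1 i + r / 2 * unit_vec u i) v).
    { apply Hm; auto. intros i _. unfold unit_vec, delta. destruct (Nat.eqb i u); lra. }
    nra.
  - pose proof (Hdiff _ (ball_step_diag n x1 r Hr)) as E.
    rewrite (Hh (r / 2) x1 v Hv) in E.
    rewrite (sum_range_ext n _ (fun u => r / 2 * Q2R (aff_mat g v u))), sum_range_scal in E
      by (intros; ring).
    apply (Rmult_eq_reg_l (r / 2)); lra.
Qed.

Definition graph_pieces (n : nat) (F : (nat -> R) -> nat -> R) (S : list (list constr)) : Prop :=
  forall x y : nat -> R,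
    (forall i, (i < n)%nat -> y i = F x i) <->
    exists C, In C S /\ forall c, In c C -> sat_constr n c x y.

Lemma sat_constr_eq n c x y :
  c_strict c = false -> sat_constr n c x y -> dotz n (c_A c) x y = c_b c.
Proof. unfold sat_constr. intros ->. auto. Qed.

Lemma dotz_unit_vec n A u w : (u < n)%nat ->
  dotz n A (unit_vec u) w = Q2R (A u) + sum_range n (fun i => Q2R (A (n + i)%nat) * w i).
Proof.
  intros Hu. unfold dotz, unit_vec. f_equal.
  rewrite <- (sum_range_delta n u (fun i => Q2R (A i)) Hu). apply sum_range_ext. intros; ring.
Qed.

Lemma dotz_combination_zero n A (W : nat -> nat -> R) s :
  (forall u, (u < n)%nat -> dotz n A (unit_vec u) (W u) = 0) ->
  dotz n A s (fun v => sum_range n (fun u => W u v * s u)) = 0.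
Proof.
  intros H. transitivity (sum_range n (fun u => s u * dotz n A (unit_vec u) (W u))).
  - rewrite (sum_range_ext n _ (fun u => Q2R (A u) * s u
                 + sum_range n (fun v => Q2R (A (n + v)%nat) * (W u v * s u)))).
    + rewrite sum_range_plus, sum_range_exchange. unfold dotz. f_equal.
      apply sum_range_ext. intros. rewrite <- sum_range_scal. apply sum_range_ext. intros; ring.
    + intros u Hu. rewrite dotz_unit_vec, Rmult_plus_distr_l, <- sum_range_scal by auto.
      f_equal; [ring|]. apply sum_range_ext; intros; ring.
  - apply sum_range_zero. intros u Hu. rewrite H; auto. ring.
Qed.

Lemma rational_direction n (C : list constr) u w : (u < n)%nat ->
  (forall c, In c C -> c_strict c = false -> dotz n (c_A c) (unit_vec u) w = 0) ->
  exists wq : nat -> Q, forall c, In c C -> c_strict c = false ->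
    dotz n (c_A c) (unit_vec u) (fun i => Q2R (wq i)) = 0.
Proof.
  intros Hu Hw.
  set (eqn := fun c : constr => ((fun i => c_A c (n + i)%nat), (- c_A c u)%Q)).
  assert (Hres : forall c v, lin_residual n (eqn c) v = dotz n (c_A c) (unit_vec u) v).
  { intros c v. unfold lin_residual, eqn. simpl. rewrite dotz_unit_vec, Q2R_opp by auto. ring. }
  destruct (rational_solution n (map eqn (filter (fun c => negb (c_strict c)) C)) w) as [wq Hwq].
  { intros e He. apply in_map_iff in He as [c [<- Hc]]. apply filter_In in Hc as [Hc Hs].
    rewrite Hres. apply Hw; auto. destruct (c_strict c); [discriminate|reflexivity]. }
  exists wq. intros c Hc Hs. rewrite <- Hres. apply Hwq.
  apply in_map, filter_In. rewrite Hs. auto.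
Qed.

Section Pieces.

Variables (n : nat) (F : (nat -> R) -> nat -> R).
Hypotheses (F_mono : monotone n F) (F_hom : homogeneous n F).

Definition constr_slack (c : constr) (x : nat -> R) : R := dotz n (c_A c) x (F x) - c_b c.

Definition sign_constant_on (c : constr) (x1 : nat -> R) (r1 : R) : Prop :=
  (forall x, ball n x1 r1 x -> constr_slack c x > 0) \/
  (forall x, ball n x1 r1 x -> constr_slack c x < 0) \/
  (forall x, ball n x1 r1 x -> constr_slack c x = 0).

Definition piece_on_ball (C : list constr) (x1 : nat -> R) (r1 : R) : Prop :=
  0 < r1 /\ forall x, ball n x1 r1 x -> forall c, In c C -> sat_constr n c x (F x).

Lemma constr_slack_lipschitz c x x' d :
  (forall i, (i < n)%nat -> Rabs (x i - x' i) <= d) ->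
  Rabs (constr_slack c x - constr_slack c x') <= coef_norm n (c_A c) * d.
Proof.
  intros H. unfold constr_slack.
  replace (dotz n (c_A c) x (F x) - c_b c - (dotz n (c_A c) x' (F x') - c_b c))
    with (dotz n (c_A c) x (F x) - dotz n (c_A c) x' (F x')) by ring.
  apply dotz_lipschitz; auto. intros i Hi.
  apply (monotone_homogeneous_nonexpansive n F F_mono F_hom x x' d H i Hi).
Qed.

Lemma sign_constant_on_sub c x1 r1 x2 r2 :
  (forall x, ball n x2 r2 x -> ball n x1 r1 x) -> sign_constant_on c x1 r1 -> sign_constant_on c x2 r2.
Proof. intros Hs [H|[H|H]]; [left|right; left|right; right]; intros; apply H; auto. Qed.

Lemma sign_constant_near c x' :
  constr_slack c x' <> 0 -> exists r, 0 < r /\ sign_constant_on c x' r.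
Proof.
  intros Hne. set (m := Rabs (constr_slack c x')).
  assert (Hm : 0 < m) by (apply Rabs_pos_lt; auto).
  pose proof (coef_norm_nonneg n (c_A c)) as HL.
  set (r := m / (coef_norm n (c_A c) + 1)).
  assert (Hr : 0 < r) by (apply Rdiv_lt_0_compat; lra).
  assert (Hclose : forall x, ball n x' r x -> Rabs (constr_slack c x - constr_slack c x') < m).
  { intros x Hx. eapply Rle_lt_trans.
    - apply constr_slack_lipschitz with (d := r). intros i Hi. left. apply Hx; auto.
    - apply Rlt_le_trans with ((coef_norm n (c_A c) + 1) * r); [nra|].
      right. unfold r. field. lra. }
  exists r. split; [auto|].
  destruct (Rlt_le_dec 0 (constr_slack c x')) as [Hp|Hp]; [left|right; left]; intros x Hx;
    specialize (Hclose x Hx); apply Rabs_def2 in Hclose; unfold m in Hclose;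
    [rewrite Rabs_right in Hclose|rewrite Rabs_left1 in Hclose]; lra.
Qed.

Lemma exists_subball_sign_constant cs : forall x0 r, 0 < r ->
  exists x1 r1, 0 < r1 /\ (forall x, ball n x1 r1 x -> ball n x0 r x) /\
    forall c, In c cs -> sign_constant_on c x1 r1.
Proof.
  induction cs as [|c cs IH]; intros x0 r Hr.
  { exists x0, r. repeat split; auto. intros c []. }
  assert (Hfirst : exists x' r', 0 < r' /\ (forall x, ball n x' r' x -> ball n x0 r x) /\
                     sign_constant_on c x' r').
  { destruct (classic (forall x, ball n x0 r x -> constr_slack c x = 0)) as [Hz|Hnz].
    - exists x0, r. repeat split; auto. right; right; auto.
    - apply not_all_ex_not in Hnz as [x' Hx']. apply imply_to_and in Hx' as [Hb Hne].
      destruct (ball_open n x0 r x' Hb) as [e [He Hsub]].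
      destruct (sign_constant_near c x' Hne) as [r' [Hr' Hsc]].
      exists x', (Rmin e r'). repeat split.
      + apply Rmin_glb_lt; auto.
      + intros x Hx. apply Hsub. intros u Hu. eapply Rlt_le_trans; [apply Hx; auto|apply Rmin_l].
      + apply (sign_constant_on_sub c x' r'); auto.
        intros x Hx u Hu. eapply Rlt_le_trans; [apply Hx; auto|apply Rmin_r]. }
  destruct Hfirst as [x' [r' [Hr' [Hsub' Hsc']]]].
  destruct (IH x' r' Hr') as [x1 [r1 [Hr1 [Hsub Hsc]]]].
  exists x1, r1. repeat split; auto.
  intros c' [<-|Hc']; [apply (sign_constant_on_sub c x' r')|]; auto.
Qed.

Lemma sat_constr_on_sign_constant_ball c x1 r1 x :
  0 < r1 -> ball n x1 r1 x -> sign_constant_on c x1 r1 ->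
  sat_constr n c x1 (F x1) -> sat_constr n c x (F x).
Proof.
  intros Hr Hx Hsc. pose proof (ball_center n x1 r1 Hr) as H1.
  unfold sat_constr. destruct Hsc as [H|[H|H]]; pose proof (H x1 H1); pose proof (H x Hx);
    unfold constr_slack in *; destruct (c_strict c); lra.
Qed.

Variable S : list (list constr).
Hypothesis F_graph : graph_pieces n F S.

Lemma exists_piece_on_ball x0 r : 0 < r ->
  exists C x1 r1, In C S /\ piece_on_ball C x1 r1 /\ forall x, ball n x1 r1 x -> ball n x0 r x.
Proof.
  intros Hr.
  destruct (exists_subball_sign_constant (concat S) x0 r Hr) as [x1 [r1 [Hr1 [Hsub HSC]]]].
  destruct (proj1 (F_graph x1 (F x1)) (fun i _ => eq_refl)) as [C [HC Hsat]].
  exists C, x1, r1. repeat split; auto. intros x Hx c Hc.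
  apply (sat_constr_on_sign_constant_ball c x1 r1 x Hr1 Hx); auto.
  apply HSC, in_concat. eauto.
Qed.

(* Since the graph is the graph of a function, moving [F x1] in a direction
   tangent to the equalities of a piece would leave the graph. *)
Lemma piece_tangent_trivial C x1 w :
  In C S -> (forall c, In c C -> sat_constr n c x1 (F x1)) ->
  (forall c, In c C -> c_strict c = false -> dotz n (c_A c) (fun _ => 0) w = 0) ->
  forall u, (u < n)%nat -> w u = 0.
Proof.
  intros HC Hsat Hw.
  destruct (finite_common_radius C (fun c t => c_strict c = true -> forall s, 0 <= s <= t ->
      0 < dotz n (c_A c) x1 (F x1) - c_b c + s * dotz n (c_A c) (fun _ => 0) w))
    as [t [Ht Htp]].
  { intros c e e' He [_ Hee] Hs s Hs'. apply He; auto. lra. }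
  { intros c Hc. destruct (c_strict c) eqn:Hs; [|exists 1; split; [lra|discriminate]].
    assert (Hpos : 0 < dotz n (c_A c) x1 (F x1) - c_b c).
    { specialize (Hsat c Hc). unfold sat_constr in Hsat. rewrite Hs in Hsat. lra. }
    destruct (pos_affine_near _ (dotz n (c_A c) (fun _ => 0) w) Hpos) as [t [Ht Htp]].
    exists t. auto. }
  assert (Hmoved : forall c, In c C -> sat_constr n c x1 (fun i => F x1 i + t * w i)).
  { intros c Hc. unfold sat_constr. rewrite dotz_shift_y. destruct (c_strict c) eqn:Hs.
    - specialize (Htp c Hc Hs t ltac:(lra)). lra.
    - rewrite Hw, Rmult_0_r, Rplus_0_r by auto. apply sat_constr_eq; auto. }
  pose proof (proj2 (F_graph x1 _) (ex_intro _ C (conj HC Hmoved))) as Hgraph.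
  intros u Hu. specialize (Hgraph u Hu).
  assert (t * w u = 0) by lra. apply Rmult_integral in H as [H|H]; lra.
Qed.

Lemma piece_rational_tangent C x1 r1 : piece_on_ball C x1 r1 ->
  forall u, (u < n)%nat -> exists wq : nat -> Q, forall c, In c C -> c_strict c = false ->
    dotz n (c_A c) (unit_vec u) (fun i => Q2R (wq i)) = 0.
Proof.
  intros [Hr1 HG] u Hu.
  enough (Hreal : exists w, forall c, In c C -> c_strict c = false -> dotz n (c_A c) (unit_vec u) w = 0)
    by (destruct Hreal as [w Hw]; exact (rational_direction n C u w Hu Hw)).
  set (t := r1 / 2). set (x := fun i => x1 i + t * unit_vec u i).
  assert (Hx : ball n x1 r1 x) by apply ball_step_unit_vec, Hr1.
  exists (fun i => (F x i - F x1 i) / t). intros c Hc Hs.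
  apply (Rmult_eq_reg_l t); [|unfold t; lra]. rewrite Rmult_0_r, <- dotz_scal.
  rewrite (dotz_ext n (c_A c) _ _ (fun i => x i - x1 i) (fun i => F x i - F x1 i))
    by (intros; unfold x; first [ring | field; unfold t; lra]).
  rewrite <- dotz_sub, !sat_constr_eq; auto.
  - ring.
  - apply HG; auto. apply ball_center; auto.
Qed.

(* Column [u] of the matrix is a rational tangent direction for the unit vector [e_u];
   as tangent directions are trivial, [F x - F x1 = P (x - x1)] on every ball of the piece. *)
Lemma piece_affine C x1 r1 : In C S -> piece_on_ball C x1 r1 ->
  exists g, forall x2 r2, piece_on_ball C x2 r2 -> forall x, ball n x2 r2 x ->
    forall v, (v < n)%nat -> F x v = aff_eval n g x v.
Proof.
  intros HC HG1.
  assert (Htan : forall u, exists wq : nat -> Q, (u < n)%nat -> forall c, In c C ->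
             c_strict c = false -> dotz n (c_A c) (unit_vec u) (fun i => Q2R (wq i)) = 0).
  { intros u. destruct (Nat.lt_ge_cases u n) as [Hu|Hu].
    - destruct (piece_rational_tangent C x1 r1 HG1 u Hu) as [wq Hwq]. eauto.
    - exists (fun _ => 0%Q). intros; lia. }
  destruct (IndefiniteDescription.functional_choice _ Htan) as [W HW].
  set (g := mkAffine (fun v => F x1 v - sum_range n (fun u => Q2R (W u v) * x1 u)) (fun v u => W u v)).
  exists g. intros x2 r2 [Hr2 HG2] x Hx.
  set (w := fun v => (F x v - F x1 v) - sum_range n (fun u => Q2R (W u v) * (x u - x1 u))).
  assert (Hw : forall v, (v < n)%nat -> w v = 0).
  { destruct HG1 as [Hr1 HG1].
    apply (piece_tangent_trivial C x1 w HC); [apply HG1; auto; apply ball_center; auto|].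
    intros c Hc Hs.
    rewrite (dotz_ext n (c_A c) _ _ (fun i => (x i - x1 i) - (x i - x1 i))
               (fun i => (F x i - F x1 i) - sum_range n (fun u => Q2R (W u i) * (x u - x1 u))))
      by (intros; first [ring | reflexivity]).
    rewrite <- dotz_sub, dotz_combination_zero by (intros; apply HW; auto).
    rewrite <- dotz_sub, !sat_constr_eq; auto; [ring|].
    apply HG1; auto. apply ball_center; auto. }
  intros v Hv. specialize (Hw v Hv). unfold w in Hw. unfold aff_eval, g; simpl.
  rewrite (sum_range_ext n (fun u => Q2R (W u v) * (x u - x1 u))
             (fun u => Q2R (W u v) * x u - Q2R (W u v) * x1 u)), sum_range_minus in Hw
    by (intros; ring).
  lra.
Qed.

End Pieces.

Lemma list_choice {A B} (l : list A) (P : A -> Prop) (Q : A -> B -> Prop) :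
  (forall a, In a l -> P a -> exists b, Q a b) ->
  exists lb, (forall b, In b lb -> exists a, In a l /\ P a /\ Q a b) /\
    forall a, In a l -> P a -> exists b, In b lb /\ Q a b.
Proof.
  induction l as [|a l IH]; intros H.
  { exists nil. split; [intros _ []|intros _ []]. }
  destruct IH as [lb [Hlb1 Hlb2]]; [intros; apply H; simpl; auto|].
  destruct (classic (P a)) as [Ha|Ha].
  - destruct (H a (or_introl eq_refl) Ha) as [b Hb].
    exists (b :: lb). split.
    + intros b' [<-|Hb']; [exists a; simpl; auto|].
      destruct (Hlb1 b' Hb') as [a' [? ?]]. exists a'. simpl; auto.
    + intros a' [<-|Ha'] HPa'; [exists b; simpl; auto|].
      destruct (Hlb2 a' Ha' HPa') as [b' [? ?]]. exists b'. simpl; auto.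
  - exists lb. split.
    + intros b' Hb'. destruct (Hlb1 b' Hb') as [a' [? ?]]. exists a'. simpl; auto.
    + intros a' [<-|Ha'] HPa'; [contradiction|auto].
Qed.

Lemma aff_eval_neq_near n F g x0 v : monotone n F -> homogeneous n F -> (v < n)%nat ->
  F x0 v <> aff_eval n g x0 v -> exists d, 0 < d /\ forall x, ball n x0 d x -> F x v <> aff_eval n g x v.
Proof.
  intros Hm Hh Hv Hne. set (m := Rabs (F x0 v - aff_eval n g x0 v)).
  assert (Hm0 : 0 < m) by (apply Rabs_pos_lt; lra).
  set (L := sum_range n (fun u => Rabs (Q2R (aff_mat g v u)))).
  assert (HL : 0 <= L) by (apply sum_range_nonneg; intros; apply Rabs_pos).
  exists (m / (L + 2)). split; [apply Rdiv_lt_0_compat; lra|].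
  intros x Hx Heq.
  assert (Hc : forall u, (u < n)%nat -> Rabs (x u - x0 u) <= m / (L + 2)) by (intros u Hu; left; apply Hx; auto).
  pose proof (monotone_homogeneous_nonexpansive n F Hm Hh x x0 _ Hc v Hv) as E1.
  pose proof (aff_eval_lipschitz n g x x0 v _ Hc) as E2.
  assert (E3 : m <= (1 + L) * (m / (L + 2))).
  { unfold m at 1. replace (F x0 v - aff_eval n g x0 v)
      with (- (F x v - F x0 v) + (aff_eval n g x v - aff_eval n g x0 v)) by (rewrite Heq; ring).
    eapply Rle_trans; [apply Rabs_triang|]. rewrite Rabs_Ropp. fold L in E2. lra. }
  assert ((1 + L) * (m / (L + 2)) < (L + 2) * (m / (L + 2))).
  { apply Rmult_lt_compat_r; [apply Rdiv_lt_0_compat|]; lra. }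
  replace ((L + 2) * (m / (L + 2))) with m in H by (field; lra). lra.
Qed.

Lemma affine_selection_exists n F S : monotone n F -> homogeneous n F -> graph_pieces n F S ->
  exists GL, (forall g, In g GL -> stochastic n g) /\
    forall x0 v, (v < n)%nat -> exists g, In g GL /\ F x0 v = aff_eval n g x0 v.
Proof.
  intros Hm Hh HS.
  destruct (list_choice S (fun C => exists x1 r1, piece_on_ball n F C x1 r1)
              (fun C g => forall x2 r2, piece_on_ball n F C x2 r2 -> forall x, ball n x2 r2 x ->
                           forall v, (v < n)%nat -> F x v = aff_eval n g x v))
    as [GL [HGL1 HGL2]].
  { intros C HC [x1 [r1 HG]]. apply (piece_affine n F S HS C x1 r1); auto. }
  exists GL. split.
  - intros g Hg. destruct (HGL1 g Hg) as [C [_ [[x1 [r1 HG]] Hgf]]].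
    apply (affine_on_ball_stochastic n F g x1 r1 Hm Hh); [apply HG|]. apply Hgf. auto.
  - intros x0 v Hv. apply NNPP. intros Hno.
    destruct (finite_common_radius GL (fun g d => forall x, ball n x0 d x -> F x v <> aff_eval n g x v))
      as [d [Hd Hdp]].
    { intros g e e' He [He' Hee] x Hx. apply He. intros u Hu. specialize (Hx u Hu). lra. }
    { intros g Hg. apply aff_eval_neq_near; auto. intros Heq. apply Hno. eauto. }
    destruct (exists_piece_on_ball n F Hm Hh S HS x0 d Hd) as [C [x1 [r1 [HC [HG Hsub]]]]].
    destruct (HGL2 C HC (ex_intro _ x1 (ex_intro _ r1 HG))) as [g [Hg Hgf]].
    apply (Hdp g Hg x1); [apply Hsub, ball_center, HG|].
    apply (Hgf x1 r1 HG x1 (ball_center n x1 r1 (proj1 HG)) v Hv).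
Qed.

(** * Bracketing along segments *)

Lemma lipschitz_pos_near (g : R -> R) M t0 :
  0 <= M -> (forall s t, Rabs (g s - g t) <= M * Rabs (s - t)) -> 0 < g t0 ->
  exists d, 0 < d /\ forall t, Rabs (t - t0) < d -> 0 < g t.
Proof.
  intros HM Hlip Hpos. exists (g t0 / (M + 1)).
  split; [apply Rdiv_lt_0_compat; lra|]. intros t Ht.
  assert (M * Rabs (t - t0) < g t0).
  { apply Rle_lt_trans with ((M + 1) * Rabs (t - t0)); [pose proof (Rabs_pos (t - t0)); nra|].
    apply Rlt_le_trans with ((M + 1) * (g t0 / (M + 1))); [apply Rmult_lt_compat_l; lra|].
    right. field. lra. }
  specialize (Hlip t t0). pose proof (Rle_abs (- (g t - g t0))). rewrite Rabs_Ropp in *. lra.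
Qed.

Section AffineBracket.

Variables (h : R -> R) (K : R) (L : list (R * R)).
Hypothesis K_nonneg : 0 <= K.
Hypothesis h_lipschitz : forall s t, Rabs (h s - h t) <= K * Rabs (s - t).
Hypothesis h_pieces : forall t, 0 <= t <= 1 -> exists ab, In ab L /\ h t = fst ab + snd ab * t.

Let below (ab : R * R) : Prop := In ab L /\ fst ab <= h 0.

Lemma lipschitz_sub_affine a b :
  forall s t, Rabs ((h s - (a + b * s)) - (h t - (a + b * t))) <= (K + Rabs b) * Rabs (s - t).
Proof.
  intros s t. replace ((h s - (a + b * s)) - (h t - (a + b * t))) with ((h s - h t) + - (b * (s - t))) by ring.
  eapply Rle_trans; [apply Rabs_triang|]. rewrite Rabs_Ropp, Rabs_mult.
  specialize (h_lipschitz s t). lra.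
Qed.

Lemma affine_gap_pos_near a b t0 : 0 < h t0 - (a + b * t0) ->
  exists d, 0 < d /\ forall t, Rabs (t - t0) < d -> 0 < h t - (a + b * t).
Proof.
  apply (lipschitz_pos_near (fun t => h t - (a + b * t)) (K + Rabs b)); [|apply lipschitz_sub_affine].
  pose proof (Rabs_pos b). lra.
Qed.

Lemma affine_gap_neq_near a b t0 : h t0 <> a + b * t0 ->
  exists d, 0 < d /\ forall t, Rabs (t - t0) < d -> h t <> a + b * t.
Proof.
  intros Hne. destruct (Rlt_le_dec (a + b * t0) (h t0)).
  - destruct (affine_gap_pos_near a b t0) as [d [Hd Hp]]; [lra|].
    exists d. split; auto. intros t Ht. specialize (Hp t Ht). lra.
  - destruct (lipschitz_pos_near (fun t => (a + b * t) - h t) (K + Rabs b) t0) as [d [Hd Hp]].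
    + pose proof (Rabs_pos b). lra.
    + intros s t. rewrite <- Rabs_Ropp.
      replace (- (a + b * s - h s - (a + b * t - h t)))
        with ((h s - (a + b * s)) - (h t - (a + b * t))) by ring.
      apply lipschitz_sub_affine.
    + lra.
    + exists d. split; auto. intros t Ht. specialize (Hp t Ht). lra.
Qed.

Lemma bracket_closed_left t0 :
  (forall d, 0 < d -> exists t ab, t0 - d < t <= t0 /\ below ab /\ h t <= fst ab + snd ab * t) ->
  exists ab, below ab /\ h t0 <= fst ab + snd ab * t0.
Proof.
  intros Hnear. apply NNPP. intros Hno.
  destruct (finite_common_radius L (fun ab d => fst ab <= h 0 ->
              forall t, Rabs (t - t0) < d -> 0 < h t - (fst ab + snd ab * t))) as [d [Hd Hdp]].
  { intros ab e e' He [_ Hee] Hle t Ht. apply He; auto. lra. }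
  { intros ab Hab. destruct (Rle_dec (fst ab) (h 0)) as [Hle|Hnle]; [|exists 1; split; [lra|tauto]].
    destruct (affine_gap_pos_near (fst ab) (snd ab) t0) as [d [Hd Hp]].
    - apply Rnot_le_lt. intros Hc. apply Hno. exists ab. split; [split|]; auto. lra.
    - exists d. auto. }
  destruct (Hnear d Hd) as [t [ab [Ht [[Hab Hle] Hdom]]]].
  assert (Rabs (t - t0) < d) by (rewrite Rabs_left1; lra).
  specialize (Hdp ab Hab Hle t H). lra.
Qed.

Lemma bracket_extends_right t0 ab0 :
  0 <= t0 < 1 -> below ab0 -> h t0 <= fst ab0 + snd ab0 * t0 ->
  exists t ab, t0 < t <= 1 /\ below ab /\ h t <= fst ab + snd ab * t.
Proof.
  intros Ht0 [Hab0 Hle0] Hdom0. apply NNPP. intros Hno.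
  assert (Hright : forall t ab, t0 < t <= 1 -> below ab -> fst ab + snd ab * t < h t).
  { intros t ab Ht Hb. apply Rnot_le_lt. intros Hc. apply Hno. exists t, ab. auto. }
  destruct (finite_common_radius L (fun ab d =>
              forall t, t0 < t < t0 + d -> t <= 1 -> h t <> fst ab + snd ab * t)) as [d [Hd Hdp]].
  { intros ab e e' He [_ Hee] t Ht Ht1. apply He; auto. lra. }
  { intros ab Hab. destruct (Rle_dec (fst ab) (h 0)) as [Hle|Hnle].
    - exists 1. split; [lra|]. intros t Ht Ht1. specialize (Hright t ab ltac:(lra) (conj Hab Hle)). lra.
    - destruct (Req_dec (h t0) (fst ab + snd ab * t0)) as [Heq|Hneq].
      + (* [ab] starts above [h] at 0 and meets [h] at [t0]; [ab0] starts below and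
           dominates at [t0], so [ab] stays strictly under [ab0] after [t0]. *)
        exists 1. split; [lra|]. intros t Ht Ht1.
        assert (Ht0p : 0 < t0).
        { destruct (Rle_lt_or_eq_dec _ _ (proj1 Ht0)) as [? | <-]; auto.
          rewrite Rmult_0_r, Rplus_0_r in Heq. lra. }
        specialize (Hright t ab0 ltac:(lra) (conj Hab0 Hle0)).
        apply Rnot_le_lt in Hnle.
        assert (Hslope : snd ab < snd ab0).
        { assert ((snd ab - snd ab0) * t0 < 0) by lra.
          apply Rnot_le_lt. intros Hc. assert (0 <= (snd ab - snd ab0) * t0) by nra. lra. }
        assert (0 < (snd ab0 - snd ab) * (t - t0)) by (apply Rmult_lt_0_compat; lra).
        lra.
      + destruct (affine_gap_neq_near (fst ab) (snd ab) t0 Hneq) as [e [He Hp]].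
        exists e. split; auto. intros t Ht _. apply Hp. rewrite Rabs_right; lra. }
  set (t := t0 + Rmin d (1 - t0) / 2).
  assert (0 < Rmin d (1 - t0)) by (apply Rmin_glb_lt; lra).
  pose proof (Rmin_l d (1 - t0)). pose proof (Rmin_r d (1 - t0)).
  destruct (h_pieces t ltac:(unfold t; lra)) as [ab [Hab Hh]].
  apply (Hdp ab Hab t); unfold t in *; lra.
Qed.

(* Sweep from 0: the supremum of the [t] at which some piece lying below [h] at 0
   dominates [h] at [t] is attained and cannot be smaller than 1. *)
Lemma affine_piece_bracket :
  exists ab, In ab L /\ fst ab <= h 0 /\ h 1 <= fst ab + snd ab.
Proof.
  set (E := fun t => 0 <= t <= 1 /\ exists ab, below ab /\ h t <= fst ab + snd ab * t).
  assert (HE0 : E 0).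
  { destruct (h_pieces 0 ltac:(lra)) as [ab [Hab Hh]]. rewrite Rmult_0_r, Rplus_0_r in *.
    split; [lra|]. exists ab. split; [split|]; auto; lra. }
  destruct (completeness E) as [t0 [Hub Hlub]].
  { exists 1. intros t [Ht _]. lra. }
  { exists 0; auto. }
  assert (Ht0 : 0 <= t0 <= 1) by (split; [apply Hub; auto|apply Hlub; intros t [Ht _]; lra]).
  destruct (bracket_closed_left t0) as [ab [Hb Hdom]].
  { intros d Hd. apply NNPP. intros Hno. assert (Hsup : is_upper_bound E (t0 - d)).
    { intros t [Ht [ab [Hb Hdom]]]. apply Rnot_lt_le. intros Hlt.
      apply Hno. exists t, ab. split; [split; [lra|apply Hub; split; eauto]|auto]. }
    specialize (Hlub _ Hsup). lra. }
  destruct (Rle_lt_or_eq_dec _ _ (proj2 Ht0)) as [Hlt|Heq].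
  - destruct (bracket_extends_right t0 ab ltac:(lra) Hb Hdom) as [t [ab' [Ht [Hb' Hdom']]]].
    assert (t <= t0) by (apply Hub; split; [lra|eauto]). lra.
  - subst t0. destruct Hb as [Hab Hle]. exists ab. rewrite Rmult_1_r in Hdom. auto.
Qed.

End AffineBracket.

Lemma aff_eval_segment n g a x t v :
  aff_eval n g (fun i => a i + t * (x i - a i)) v =
  aff_eval n g a v + t * (aff_eval n g x v - aff_eval n g a v).
Proof.
  rewrite !aff_eval_sub, <- sum_range_scal.
  match goal with |- ?l = _ => replace l with (aff_eval n g a v +
    (aff_eval n g (fun i => a i + t * (x i - a i)) v - aff_eval n g a v)) by ring end.
  rewrite aff_eval_sub. f_equal. apply sum_range_ext. intros; ring.
Qed.

(* Restricted to the segment [a, x], F_v is piecewise affine with pieces among the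
   [g_v], so [affine_piece_bracket] applies. *)
Lemma segment_bracket n F GL : is_map_Rn n F -> monotone n F -> homogeneous n F ->
  (forall x0 v, (v < n)%nat -> exists g, In g GL /\ F x0 v = aff_eval n g x0 v) ->
  forall a x v, (v < n)%nat ->
    exists g, In g GL /\ aff_eval n g a v <= F a v /\ F x v <= aff_eval n g x v.
Proof.
  intros Hmap Hm Hh Hsel a x v Hv.
  set (seg := fun t i => a i + t * (x i - a i)).
  set (K := sum_range n (fun u => Rabs (x u - a u))).
  assert (HK : 0 <= K) by (apply sum_range_nonneg; intros; apply Rabs_pos).
  destruct (affine_piece_bracket (fun t => F (seg t) v) K
              (map (fun g => (aff_eval n g a v, aff_eval n g x v - aff_eval n g a v)) GL) HK)
    as [ab [Hab [H0 H1]]].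
  - intros s t. apply (monotone_homogeneous_nonexpansive n F Hm Hh); auto. intros u Hu. unfold seg.
    replace (a u + s * (x u - a u) - (a u + t * (x u - a u))) with ((s - t) * (x u - a u)) by ring.
    rewrite Rabs_mult, Rmult_comm. apply Rmult_le_compat_r; [apply Rabs_pos|].
    apply (term_le_sum_range n (fun u => Rabs (x u - a u))); auto. intros; apply Rabs_pos.
  - intros t _. destruct (Hsel (seg t) v Hv) as [g [Hg Hgv]].
    exists (aff_eval n g a v, aff_eval n g x v - aff_eval n g a v).
    split; [apply in_map_iff; exists g; auto|]. simpl. rewrite Hgv.
    unfold seg. rewrite aff_eval_segment. ring.
  - apply in_map_iff in Hab as [g [<- Hg]]. simpl in H0, H1. exists g. split; auto.
    assert (E0 : F (seg 0) v = F a v) by (apply Hmap; auto; intros; unfold seg; ring).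
    assert (E1 : F (seg 1) v = F x v) by (apply Hmap; auto; intros; unfold seg; ring).
    lra.
Qed.

(** * Admissible masks *)

Fixpoint bool_lists (k : nat) : list (list bool) :=
  match k with
  | O => nil :: nil
  | S k' => map (cons true) (bool_lists k') ++ map (cons false) (bool_lists k')
  end.

Lemma in_bool_lists k m : In m (bool_lists k) <-> length m = k.
Proof.
  revert m; induction k as [|k IH]; intros m; simpl.
  - split; [intros [<-|[]]; auto|]. destruct m; [auto|discriminate].
  - rewrite in_app_iff, !in_map_iff. split.
    + intros [[m' [<- H]]|[m' [<- H]]]; simpl; f_equal; apply IH; auto.
    + destruct m as [|b m]; [discriminate|]. intros H. injection H as H.
      destruct b; [left|right]; exists m; rewrite IH; auto.
Qed.

(* Masks encode the nonempty index sets [J] of the min-max formula. *)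
Definition masks (k : nat) : list (list bool) := filter (existsb (fun b => b)) (bool_lists k).

Lemma in_masks k m : In m (masks k) <-> length m = k /\ existsb (fun b => b) m = true.
Proof. unfold masks. rewrite filter_In, in_bool_lists. tauto. Qed.

Definition default_affine : affine_map := mkAffine (fun _ => 0) (fun _ _ => 0%Q).
Definition nth_aff (GL : list affine_map) (j : nat) : affine_map := nth j GL default_affine.
Definition nmasks (GL : list affine_map) : nat := length (masks (length GL)).
Definition mask_bit (GL : list affine_map) (s j : nat) : bool :=
  nth j (nth s (masks (length GL)) nil) false.

Lemma mask_bit_exists GL s : (s < nmasks GL)%nat ->
  exists j, (j < length GL)%nat /\ mask_bit GL s j = true.
Proof.
  intros Hs. apply (nth_In _ nil), in_masks in Hs as [Hlen Hex].
  apply existsb_exists in Hex as [b [Hb ->]]. apply (In_nth _ _ false) in Hb as [j [Hj Ej]].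
  exists j. rewrite <- Hlen. auto.
Qed.

Definition admissible n F (GL : list affine_map) (v s : nat) : bool :=
  if excluded_middle_informative (forall x, exists j, (j < length GL)%nat /\
       mask_bit GL s j = true /\ F x v <= aff_eval n (nth_aff GL j) x v)
  then true else false.

(* The mask of the maps lying below F at [x0] is admissible, by [segment_bracket]. *)
Lemma admissible_mask_exists n F GL :
  (forall x0 v, (v < n)%nat -> exists g, In g GL /\ F x0 v = aff_eval n g x0 v) ->
  (forall a x v, (v < n)%nat ->
     exists g, In g GL /\ aff_eval n g a v <= F a v /\ F x v <= aff_eval n g x v) ->
  forall x0 v, (v < n)%nat -> exists s, (s < nmasks GL)%nat /\ admissible n F GL v s = true /\
    forall j, (j < length GL)%nat -> mask_bit GL s j = true -> aff_eval n (nth_aff GL j) x0 v <= F x0 v.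
Proof.
  intros Hsel Hseg x0 v Hv.
  set (below := fun j => if Rle_dec (aff_eval n (nth_aff GL j) x0 v) (F x0 v) then true else false).
  assert (Hbelow : forall j, below j = true <-> aff_eval n (nth_aff GL j) x0 v <= F x0 v).
  { intros j. unfold below. destruct (Rle_dec _ _); split; auto; discriminate. }
  assert (Hnth : forall g, In g GL -> exists j, (j < length GL)%nat /\ nth_aff GL j = g).
  { intros g Hg. apply (In_nth _ _ default_affine) in Hg as [j [Hj E]]. eauto. }
  set (m := map below (seq 0 (length GL))).
  assert (Hm : In m (masks (length GL))).
  { apply in_masks. split; [unfold m; rewrite length_map, length_seq; auto|].
    destruct (Hsel x0 v Hv) as [g [Hg Hgv]]. destruct (Hnth g Hg) as [j [Hj <-]].
    apply existsb_exists. exists (below j). split.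
    - apply in_map, in_seq. lia.
    - apply Hbelow. lra. }
  apply (In_nth _ _ nil) in Hm as [s [Hs Es]].
  assert (Hbit : forall j, (j < length GL)%nat -> mask_bit GL s j = below j).
  { intros j Hj. unfold mask_bit. rewrite Es. unfold m.
    rewrite (nth_indep _ false (below 0%nat)) by (rewrite length_map, length_seq; auto).
    rewrite map_nth, seq_nth by auto. reflexivity. }
  exists s. split; [exact Hs|]. split.
  - unfold admissible. destruct (excluded_middle_informative _) as [_|Hn]; auto. exfalso. apply Hn.
    intros x. destruct (Hseg x0 x v Hv) as [g [Hg [H1 H2]]]. destruct (Hnth g Hg) as [j [Hj <-]].
    exists j. rewrite Hbit, Hbelow by auto. auto.
  - intros j Hj. rewrite Hbit, Hbelow by auto. auto.
Qed.

(** * The game *)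

Lemma div_mod_pair b i j : (j < b)%nat -> ((i * b + j) / b = i /\ (i * b + j) mod b = j)%nat.
Proof.
  intros Hj. split.
  - symmetry. apply Nat.div_unique with j; lia.
  - symmetry. apply Nat.mod_unique with i; lia.
Qed.

Lemma div_mod_decompose b w : (0 < b)%nat -> (w = w / b * b + w mod b /\ w mod b < b)%nat.
Proof.
  intros Hb. pose proof (Nat.div_mod w b ltac:(lia)). pose proof (Nat.mod_upper_bound w b ltac:(lia)). lia.
Qed.

Lemma div_lt_of_lt_mul a b w : (0 < b)%nat -> (w < a * b)%nat -> (w / b < a)%nat.
Proof. intros Hb Hw. destruct (div_mod_decompose b w Hb) as [E _]. nia. Qed.

Definition pair_enum {X} (a b : nat) (P : nat -> nat -> bool) (f : nat -> nat -> X) : list X :=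
  map (fun w => f (w / b)%nat (w mod b)%nat)
    (filter (fun w => P (w / b)%nat (w mod b)%nat) (seq 0 (a * b))).

Lemma in_pair_enum {X} a b P (f : nat -> nat -> X) y : (0 < b)%nat ->
  In y (pair_enum a b P f) <->
  exists i j, (i < a)%nat /\ (j < b)%nat /\ P i j = true /\ y = f i j.
Proof.
  intros Hb. unfold pair_enum. rewrite in_map_iff. split.
  - intros [w [<- Hw]]. apply filter_In in Hw as [Hw HP]. apply in_seq in Hw.
    exists (w / b)%nat, (w mod b)%nat. repeat split; auto.
    + apply div_lt_of_lt_mul; auto; lia.
    + apply Nat.mod_upper_bound. lia.
  - intros [i [j [Hi [Hj [HP ->]]]]]. destruct (div_mod_pair b i j Hj) as [E1 E2].
    exists (i * b + j)%nat. rewrite E1, E2. split; auto.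
    apply filter_In. rewrite E1, E2. split; auto. apply in_seq. nia.
Qed.

Lemma NoDup_pair_enum {X} a b P (f : nat -> nat -> X) : (0 < b)%nat ->
  (forall i j i' j', (j < b)%nat -> (j' < b)%nat -> f i j = f i' j' -> i = i' /\ j = j') ->
  NoDup (pair_enum a b P f).
Proof.
  intros Hb Hinj. apply NoDup_map_NoDup_ForallPairs; [|apply NoDup_filter, seq_NoDup].
  intros w w' _ _ Hf.
  destruct (div_mod_decompose b w Hb) as [Ew Hw]. destruct (div_mod_decompose b w' Hb) as [Ew' Hw'].
  destruct (Hinj _ _ _ _ Hw Hw' Hf) as [E1 E2]. lia.
Qed.

Definition Qpos_bool (q : Q) : bool := negb (Qle_bool q 0).

Lemma Qpos_bool_true q : Qpos_bool q = true -> (0 < q)%Q.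
Proof.
  unfold Qpos_bool. intros H. apply Qnot_le_lt. intros Hc.
  apply Qle_bool_iff in Hc. rewrite Hc in H. discriminate.
Qed.

Lemma Qpos_bool_false q : Qpos_bool q = false -> Q2R q <= 0.
Proof.
  unfold Qpos_bool. intros H. destruct (Qle_bool q 0) eqn:E; [|discriminate].
  apply Qle_bool_iff, Qle_Rle in E. rewrite Q2R_0 in E. auto.
Qed.

(* Vertex encoding: Max vertex [v * nmasks GL + s] is the mask [s] chosen at Min vertex [v];
   Random vertex [v * length GL + j] is the map [g_j] chosen for the row [v]. *)
Definition rand_prob (GL : list affine_map) (r u : nat) : Q :=
  aff_mat (nth_aff GL (r mod length GL)) (r / length GL) u.
Definition rand_const (GL : list affine_map) (r : nat) : R :=
  aff_const (nth_aff GL (r mod length GL)) (r / length GL).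

Definition min_edges n F GL : list (vtx * vtx) :=
  pair_enum n (nmasks GL) (admissible n F GL) (fun v s => (VMin v, VMax (v * nmasks GL + s))).
Definition max_edges n GL : list (vtx * vtx) :=
  pair_enum (n * nmasks GL) (length GL) (fun w j => mask_bit GL (w mod nmasks GL) j)
    (fun w j => (VMax w, VRand (w / nmasks GL * length GL + j))).
Definition rand_edges n GL : list (vtx * vtx) :=
  pair_enum (n * length GL) n (fun r u => Qpos_bool (rand_prob GL r u)) (fun r u => (VRand r, VMin u)).

Definition edge_weight GL (e : vtx * vtx) : R :=
  match e with (VMax _, VRand r) => rand_const GL r | _ => 0 end.
Definition edge_prob GL (e : vtx * vtx) : Q :=
  match e with (VRand r, VMin u) => rand_prob GL r u | _ => 0%Q end.

Definition game_of n F GL : game :=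
  mkGame n (n * length GL) (n * nmasks GL)
    (min_edges n F GL ++ max_edges n GL ++ rand_edges n GL) (edge_weight GL) (edge_prob GL).

Definition absorption_of GL (s t : vtx) : R :=
  match s with
  | VRand r => match t with VMin u => Q2R (rand_prob GL r u) | _ => 0 end
  | _ => if vtx_eqb s t then 1 else 0
  end.

Lemma vtx_eqb_spec a b : vtx_eqb a b = true <-> a = b.
Proof. destruct a, b; simpl; rewrite ?Nat.eqb_eq; split; intros H; congruence. Qed.

Lemma in_out G x e : In e (out G x) <-> In e (g_edges G) /\ fst e = x.
Proof. unfold out. rewrite filter_In, vtx_eqb_spec. tauto. Qed.

Lemma nmasks_pos GL : (0 < length GL)%nat -> (0 < nmasks GL)%nat.
Proof.
  intros HK. unfold nmasks.
  assert (Hin : In (repeat true (length GL)) (masks (length GL))).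
  { apply in_masks. rewrite repeat_length. split; auto.
    destruct (length GL); [lia|reflexivity]. }
  destruct (masks (length GL)); [destruct Hin|simpl; lia].
Qed.

Lemma nstep_absorbing G k s t : (is_min s \/ is_max s) -> nstep G k s t = if vtx_eqb s t then 1 else 0.
Proof. intros H. destruct k; simpl; auto. destruct s; simpl in H; auto. destruct H; contradiction. Qed.

Lemma Un_cv_eventually_const (u : nat -> R) l N : (forall k, (k >= N)%nat -> u k = l) -> Un_cv u l.
Proof.
  intros H eps Heps. exists N. intros k Hk. rewrite H by auto.
  unfold R_dist. rewrite Rminus_diag, Rabs_R0. auto.
Qed.

Section GameOf.

Variables (n : nat) (F : (nat -> R) -> nat -> R) (GL : list affine_map).
Hypotheses (n_pos : (0 < n)%nat) (GL_nonempty : (0 < length GL)%nat).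

Lemma in_min_edges e : In e (min_edges n F GL) <-> exists v s, (v < n)%nat /\
  (s < nmasks GL)%nat /\ admissible n F GL v s = true /\ e = (VMin v, VMax (v * nmasks GL + s)).
Proof. apply in_pair_enum, nmasks_pos, GL_nonempty. Qed.

Lemma in_max_edges e : In e (max_edges n GL) <-> exists w j, (w < n * nmasks GL)%nat /\
  (j < length GL)%nat /\ mask_bit GL (w mod nmasks GL) j = true /\
  e = (VMax w, VRand (w / nmasks GL * length GL + j)).
Proof. apply in_pair_enum, GL_nonempty. Qed.

Lemma in_rand_edges e : In e (rand_edges n GL) <-> exists r u, (r < n * length GL)%nat /\
  (u < n)%nat /\ Qpos_bool (rand_prob GL r u) = true /\ e = (VRand r, VMin u).
Proof. apply in_pair_enum, n_pos. Qed.

Lemma in_game_edges e : In e (g_edges (game_of n F GL)) <->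
  In e (min_edges n F GL) \/ In e (max_edges n GL) \/ In e (rand_edges n GL).
Proof. simpl. rewrite !in_app_iff. tauto. Qed.

Lemma out_min v e : In e (out (game_of n F GL) (VMin v)) <->
  exists s, (s < nmasks GL)%nat /\ admissible n F GL v s = true /\ (v < n)%nat /\
    e = (VMin v, VMax (v * nmasks GL + s)).
Proof.
  rewrite in_out, in_game_edges, in_min_edges, in_max_edges, in_rand_edges. split.
  - intros [[[v' [s [? [? [? ->]]]]]|[[w [j [_ [_ [_ ->]]]]]|[r [u [_ [_ [_ ->]]]]]]] Hf];
      simpl in Hf; try discriminate. injection Hf as ->. eauto.
  - intros [s [? [? [? ->]]]]. split; [left; eauto 7|reflexivity].
Qed.

Lemma out_max w e : In e (out (game_of n F GL) (VMax w)) <->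
  exists j, (j < length GL)%nat /\ mask_bit GL (w mod nmasks GL) j = true /\
    (w < n * nmasks GL)%nat /\ e = (VMax w, VRand (w / nmasks GL * length GL + j)).
Proof.
  rewrite in_out, in_game_edges, in_min_edges, in_max_edges, in_rand_edges. split.
  - intros [[[v' [s [_ [_ [_ ->]]]]]|[[w' [j [? [? [? ->]]]]]|[r [u [_ [_ [_ ->]]]]]]] Hf];
      simpl in Hf; try discriminate. injection Hf as ->. eauto.
  - intros [j [? [? [? ->]]]]. split; [right; left; eauto 7|reflexivity].
Qed.

Lemma out_rand r e : In e (out (game_of n F GL) (VRand r)) <->
  exists u, (u < n)%nat /\ Qpos_bool (rand_prob GL r u) = true /\
    (r < n * length GL)%nat /\ e = (VRand r, VMin u).
Proof.
  rewrite in_out, in_game_edges, in_min_edges, in_max_edges, in_rand_edges. split.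
  - intros [[[v' [s [_ [_ [_ ->]]]]]|[[w' [j [_ [_ [_ ->]]]]]|[r' [u [? [? [? ->]]]]]]] Hf];
      simpl in Hf; try discriminate. injection Hf as ->. eauto.
  - intros [u [? [? [? ->]]]]. split; [right; right; eauto 7|reflexivity].
Qed.

Lemma NoDup_game_edges : NoDup (g_edges (game_of n F GL)).
Proof.
  pose proof (nmasks_pos GL GL_nonempty) as HM. simpl.
  repeat apply NoDup_app.
  - apply NoDup_pair_enum; auto. intros i j i' j' Hj Hj' H. injection H as -> H. lia.
  - apply NoDup_pair_enum; auto. intros i j i' j' Hj Hj' H. injection H as -> H. lia.
  - apply NoDup_pair_enum; auto. intros i j i' j' Hj Hj' H. injection H as -> ->. auto.
  - intros e He1 He2. apply in_max_edges in He1 as [w [j [_ [_ [_ ->]]]]].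
    apply in_rand_edges in He2 as [r [u [_ [_ [_ He]]]]]. discriminate.
  - intros e He1 He2. apply in_min_edges in He1 as [v [s [_ [_ [_ ->]]]]].
    apply in_app_iff in He2 as [He2|He2].
    + apply in_max_edges in He2 as [w [j [_ [_ [_ He]]]]]. discriminate.
    + apply in_rand_edges in He2 as [r [u [_ [_ [_ He]]]]]. discriminate.
Qed.

Hypothesis GL_stochastic : forall g, In g GL -> stochastic n g.

Lemma rand_prob_stochastic r : (r < n * length GL)%nat ->
  (forall u, (u < n)%nat -> 0 <= Q2R (rand_prob GL r u)) /\
  sum_range n (fun u => Q2R (rand_prob GL r u)) = 1.
Proof.
  intros Hr. unfold rand_prob.
  assert (Hin : In (nth_aff GL (r mod length GL)) GL) by (apply nth_In, Nat.mod_upper_bound; lia).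
  apply (GL_stochastic _ Hin). apply div_lt_of_lt_mul; auto.
Qed.

Lemma rand_prob_zero r u : (r < n * length GL)%nat -> (u < n)%nat ->
  Qpos_bool (rand_prob GL r u) = false -> Q2R (rand_prob GL r u) = 0.
Proof.
  intros Hr Hu Hp. apply Qpos_bool_false in Hp.
  pose proof (proj1 (rand_prob_stochastic r Hr) u Hu). lra.
Qed.

Lemma rand_successor_exists r : (r < n * length GL)%nat ->
  exists u, (u < n)%nat /\ Qpos_bool (rand_prob GL r u) = true.
Proof.
  intros Hr. apply NNPP. intros Hno.
  assert (sum_range n (fun u => Q2R (rand_prob GL r u)) = 0).
  { apply sum_range_zero. intros u Hu. apply rand_prob_zero; auto.
    destruct (Qpos_bool _) eqn:E; [exfalso; eauto|auto]. }
  pose proof (proj2 (rand_prob_stochastic r Hr)). lra.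
Qed.

Lemma sum_out_rand r (h : vtx * vtx -> R) : (r < n * length GL)%nat ->
  (forall u, (u < n)%nat -> Qpos_bool (rand_prob GL r u) = false -> h (VRand r, VMin u) = 0) ->
  sumR (map h (out (game_of n F GL) (VRand r))) = sum_range n (fun u => h (VRand r, VMin u)).
Proof.
  intros Hr Hzero.
  transitivity (sumR (map (fun u => h (VRand r, VMin u))
                   (filter (fun u => Qpos_bool (rand_prob GL r u)) (seq 0 n)))).
  - rewrite <- (map_map (fun u => (VRand r, VMin u)) h).
    apply sumR_perm, Permutation_map, NoDup_Permutation.
    + apply NoDup_filter, NoDup_game_edges; auto.
    + apply NoDup_map_NoDup_ForallPairs; [|apply NoDup_filter, seq_NoDup].
      intros a b _ _ H. congruence.
    + intros e. rewrite out_rand by auto. rewrite in_map_iff. split.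
      * intros [u [Hu [Hp [_ ->]]]]. exists u. rewrite filter_In, in_seq. auto with arith.
      * intros [u [<- Hu]]. apply filter_In in Hu as [Hu Hp]. apply in_seq in Hu.
        exists u. repeat split; auto. lia.
  - apply sumR_map_filter_zero. intros u Hu Hp. apply in_seq in Hu. apply Hzero; auto. lia.
Qed.

Lemma edge_shape e : In e (g_edges (game_of n F GL)) ->
  (is_min (fst e) /\ is_max (snd e)) \/ (is_max (fst e) /\ is_rand (snd e)) \/
  (is_rand (fst e) /\ is_min (snd e)).
Proof.
  rewrite in_game_edges, in_min_edges, in_max_edges, in_rand_edges by auto.
  intros [[v [s [_ [_ [_ ->]]]]]|[[w [j [_ [_ [_ ->]]]]]|[r [u [_ [_ [_ ->]]]]]]]; simpl; tauto.
Qed.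

Lemma game_of_edges_valid e : In e (g_edges (game_of n F GL)) ->
  valid_vtx (game_of n F GL) (fst e) /\ valid_vtx (game_of n F GL) (snd e).
Proof.
  pose proof (nmasks_pos GL GL_nonempty).
  rewrite in_game_edges, in_min_edges, in_max_edges, in_rand_edges by auto.
  intros [[v [s [? [? [_ ->]]]]]|[[w [j [? [? [_ ->]]]]]|[r [u [? [? [_ ->]]]]]]]; simpl; split; try nia.
  pose proof (div_lt_of_lt_mul n (nmasks GL) w ltac:(lia) ltac:(lia)). nia.
Qed.

Lemma walk_from_min_meets_max u l : is_min u -> walk (game_of n F GL) u l -> l <> nil ->
  exists x, In x l /\ is_max x.
Proof.
  intros Hu Hw Hl. destruct l as [|w l]; [congruence|]. destruct Hw as [He _].
  exists w. split; [left; auto|].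
  destruct (edge_shape _ He) as [[_ ?]|[[? _]|[? _]]]; simpl in *; auto;
    destruct u; simpl in *; contradiction.
Qed.

Lemma walk_between_max_meets_min u l : is_max u -> walk (game_of n F GL) u l -> l <> nil ->
  is_max (last l u) -> exists x, In x l /\ is_min x.
Proof.
  intros Hu Hw Hl Hlast. destruct l as [|w l]; [congruence|]. destruct Hw as [He Hw].
  assert (Hwr : is_rand w).
  { destruct (edge_shape _ He) as [[? _]|[[_ ?]|[? _]]]; simpl in *; auto;
      destruct u; simpl in *; contradiction. }
  destruct l as [|w2 l]; [destruct w; simpl in *; contradiction|].
  destruct Hw as [He2 _]. exists w2. split; [right; left; auto|].
  destruct (edge_shape _ He2) as [[? _]|[[? _]|[_ ?]]]; simpl in *; auto;
    destruct w; simpl in *; contradiction.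
Qed.

Lemma nstep_rand_absorbed r k t : (r < n * length GL)%nat ->
  valid_vtx (game_of n F GL) t -> (is_min t \/ is_max t) ->
  nstep (game_of n F GL) (S k) (VRand r) t = absorption_of GL (VRand r) t.
Proof.
  intros Hr Hvt Ht.
  change (nstep (game_of n F GL) (S k) (VRand r) t) with
    (sumR (map (fun e => Q2R (g_q (game_of n F GL) e) * nstep (game_of n F GL) k (snd e) t)
               (out (game_of n F GL) (VRand r)))).
  rewrite sum_out_rand by (auto; intros u Hu Hp; simpl; rewrite rand_prob_zero by auto; ring).
  simpl. rewrite (sum_range_ext n _ (fun u => Q2R (rand_prob GL r u) * if vtx_eqb (VMin u) t then 1 else 0))
    by (intros; rewrite nstep_absorbing; simpl; auto).
  destruct t as [u0|r0|w0]; simpl in Hvt, Ht |- *; [|tauto|].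
  - rewrite (sum_range_ext n _ (fun u => delta u u0 * Q2R (rand_prob GL r u))) by (intros; unfold delta; ring).
    apply sum_range_delta. auto.
  - apply sum_range_zero. intros; ring.
Qed.

Lemma game_of_absorption : absorption_probs (game_of n F GL) (absorption_of GL).
Proof.
  intros e t He Hvt Hat. pose proof (nmasks_pos GL GL_nonempty).
  rewrite in_game_edges, in_min_edges, in_max_edges, in_rand_edges in He by auto.
  destruct He as [[v [s [_ [_ [_ ->]]]]]|[[w [j [Hw [Hj [_ ->]]]]]|[r [u [_ [_ [_ ->]]]]]]];
    simpl snd.
  - apply (Un_cv_eventually_const _ _ 0). intros k _. apply nstep_absorbing. simpl; auto.
  - apply (Un_cv_eventually_const _ _ 1). intros [|k] Hk; [lia|]. apply nstep_rand_absorbed; auto.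
    pose proof (div_lt_of_lt_mul n (nmasks GL) w ltac:(lia) Hw). nia.
  - apply (Un_cv_eventually_const _ _ 0). intros k _. apply nstep_absorbing. simpl; auto.
Qed.

Lemma max_vertex_values x w y : (w < n * nmasks GL)%nat ->
  In y (map (fun e => g_r (game_of n F GL) e +
                 sum_range (g_n (game_of n F GL)) (fun u => absorption_of GL (snd e) (VMin u) * x u))
            (out (game_of n F GL) (VMax w))) <->
  exists j, (j < length GL)%nat /\ mask_bit GL (w mod nmasks GL) j = true /\
    y = aff_eval n (nth_aff GL j) x (w / nmasks GL).
Proof.
  intros Hw. rewrite in_map_iff.
  assert (Hval : forall j, (j < length GL)%nat ->
    g_r (game_of n F GL) (VMax w, VRand (w / nmasks GL * length GL + j)) +
    sum_range (g_n (game_of n F GL))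
      (fun u => absorption_of GL (VRand (w / nmasks GL * length GL + j)) (VMin u) * x u)
    = aff_eval n (nth_aff GL j) x (w / nmasks GL)).
  { intros j Hj. destruct (div_mod_pair (length GL) (w / nmasks GL) j Hj) as [E1 E2].
    simpl. unfold aff_eval, rand_const, rand_prob. rewrite E1, E2. reflexivity. }
  split.
  - intros [e [<- He]]. apply out_max in He as [j [Hj [Hb [_ ->]]]]; auto. exists j. auto.
  - intros [j [Hj [Hb ->]]]. exists (VMax w, VRand (w / nmasks GL * length GL + j)).
    split; [apply Hval; auto|]. apply out_max; eauto.
Qed.

Lemma min_vertex_values (val : nat -> R) v y : (v < n)%nat ->
  In y (map (fun e => g_r (game_of n F GL) e + sum_range (g_m (game_of n F GL))
                        (fun w => absorption_of GL (snd e) (VMax w) * val w))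
            (out (game_of n F GL) (VMin v))) <->
  exists s, (s < nmasks GL)%nat /\ admissible n F GL v s = true /\ y = val (v * nmasks GL + s)%nat.
Proof.
  intros Hv. pose proof (nmasks_pos GL GL_nonempty). rewrite in_map_iff.
  assert (Hval : forall s, (s < nmasks GL)%nat ->
    g_r (game_of n F GL) (VMin v, VMax (v * nmasks GL + s)) +
    sum_range (g_m (game_of n F GL))
      (fun w => absorption_of GL (VMax (v * nmasks GL + s)) (VMax w) * val w)
    = val (v * nmasks GL + s)%nat).
  { intros s Hs. simpl. rewrite Rplus_0_l.
    rewrite (sum_range_ext _ _ (fun w => delta w (v * nmasks GL + s) * val w))
      by (intros; unfold delta; rewrite Nat.eqb_sym; reflexivity).
    apply sum_range_delta. nia. }
  split.
  - intros [e [<- He]]. apply out_min in He as [s [Hs [Ha [_ ->]]]]; auto. eauto.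
  - intros [s [Hs [Ha ->]]]. exists (VMin v, VMax (v * nmasks GL + s)).
    split; [apply Hval; auto|]. apply out_min; eauto 6.
Qed.

Lemma game_of_prob_pos e : In e (g_edges (game_of n F GL)) -> is_rand (fst e) ->
  (0 < g_q (game_of n F GL) e)%Q.
Proof.
  rewrite in_game_edges, in_min_edges, in_max_edges, in_rand_edges by auto.
  intros [[v [s [_ [_ [_ ->]]]]]|[[w [j [_ [_ [_ ->]]]]]|[r [u [_ [_ [Hp ->]]]]]]] Hr;
    simpl in *; try contradiction.
  apply Qpos_bool_true. auto.
Qed.

Lemma game_of_prob_sum r : (r < n * length GL)%nat ->
  (sumQ (map (g_q (game_of n F GL)) (out (game_of n F GL) (VRand r))) == 1)%Q.
Proof.
  intros Hr. apply eqR_Qeq. rewrite sumQ_map_Q2R.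
  rewrite (sum_out_rand r (fun e => Q2R (g_q (game_of n F GL) e))); auto.
  - simpl. rewrite (proj2 (rand_prob_stochastic r Hr)). unfold Q2R; simpl; lra.
  - intros u Hu Hp. apply rand_prob_zero; auto.
Qed.

Section AdmissibleMasks.

Hypothesis admissible_exists : forall x0 v, (v < n)%nat ->
  exists s, (s < nmasks GL)%nat /\ admissible n F GL v s = true /\
    forall j, (j < length GL)%nat -> mask_bit GL s j = true ->
      aff_eval n (nth_aff GL j) x0 v <= F x0 v.

Lemma game_of_out_nonempty v : valid_vtx (game_of n F GL) v -> out (game_of n F GL) v <> nil.
Proof.
  intros Hv Hnil. pose proof (nmasks_pos GL GL_nonempty). destruct v as [v|r|w]; simpl in Hv.
  - destruct (admissible_exists (fun _ => 0) v Hv) as [s [Hs [Ha _]]].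
    assert (Hin : In (VMin v, VMax (v * nmasks GL + s)) (out (game_of n F GL) (VMin v)))
      by (apply out_min; eauto 6).
    rewrite Hnil in Hin. destruct Hin.
  - destruct (rand_successor_exists r Hv) as [u [Hu Hp]].
    assert (Hin : In (VRand r, VMin u) (out (game_of n F GL) (VRand r))) by (apply out_rand; eauto).
    rewrite Hnil in Hin. destruct Hin.
  - destruct (mask_bit_exists GL (w mod nmasks GL)) as [j [Hj Hb]]; [apply Nat.mod_upper_bound; lia|].
    assert (Hin : In (VMax w, VRand (w / nmasks GL * length GL + j)) (out (game_of n F GL) (VMax w)))
      by (apply out_max; eauto).
    rewrite Hnil in Hin. destruct Hin.
Qed.

Lemma game_of_ok : game_ok (game_of n F GL).
Proof.
  pose proof (nmasks_pos GL GL_nonempty).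
  split; [simpl; auto|]. split; [simpl; nia|]. split; [apply NoDup_game_edges; auto|].
  split; [apply game_of_edges_valid|]. split; [apply game_of_out_nonempty|].
  split; [apply game_of_prob_pos|]. split; [apply game_of_prob_sum|].
  split; [intros u l Hu Hw Hl _; apply (walk_from_min_meets_max u l); auto|].
  split; [apply walk_between_max_meets_min|].
  intros r Hr. destruct (rand_successor_exists r Hr) as [u [Hu Hp]].
  exists (VMin u :: nil). simpl. repeat split; auto.
  apply in_game_edges, or_intror, or_intror, in_rand_edges; eauto 7.
Qed.

Lemma game_of_encodes x v : (v < n)%nat -> F x v = encoded_op (game_of n F GL) (absorption_of GL) x v.
Proof.
  intros Hv. pose proof (nmasks_pos GL GL_nonempty).
  set (G := game_of n F GL).
  set (vals := fun w => map (fun e => g_r G e +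
                 sum_range (g_n G) (fun u => absorption_of GL (snd e) (VMin u) * x u)) (out G (VMax w))).
  assert (Hcode : forall s, (s < nmasks GL)%nat -> ((v * nmasks GL + s) < n * nmasks GL)%nat /\
             ((v * nmasks GL + s) / nmasks GL = v)%nat /\ ((v * nmasks GL + s) mod nmasks GL = s)%nat).
  { intros s Hs. destruct (div_mod_pair (nmasks GL) v s Hs). split; auto. nia. }
  assert (Hupper : forall s, (s < nmasks GL)%nat -> admissible n F GL v s = true ->
             F x v <= maxl (vals (v * nmasks GL + s)%nat)).
  { intros s Hs Ha. unfold admissible in Ha.
    destruct (excluded_middle_informative _) as [Hp|_]; [|discriminate].
    destruct (Hp x) as [j [Hj [Hb Hle]]]. eapply Rle_trans; [apply Hle|]. apply maxl_ge.
    destruct (Hcode s Hs) as [Hw [E1 E2]].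
    apply max_vertex_values; auto. rewrite E1, E2. eauto. }
  destruct (admissible_exists x v Hv) as [s0 [Hs0 [Ha0 Hbelow]]].
  assert (Hattained : maxl (vals (v * nmasks GL + s0)%nat) = F x v).
  { destruct (Hcode s0 Hs0) as [Hw [E1 E2]].
    apply Rle_antisym; [|apply Hupper; auto].
    destruct (mask_bit_exists GL s0 Hs0) as [j1 [Hj1 Hb1]].
    assert (Hin : In (aff_eval n (nth_aff GL j1) x v) (vals (v * nmasks GL + s0)%nat)).
    { apply max_vertex_values; auto. rewrite E1, E2. eauto. }
    assert (Hne : vals (v * nmasks GL + s0)%nat <> nil) by (intros Hnil; rewrite Hnil in Hin; destruct Hin).
    pose proof (maxl_in _ Hne) as Hm.
    apply max_vertex_values in Hm as [j [Hj [Hb ->]]]; auto. rewrite E1. apply Hbelow; auto.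
    rewrite <- E2. auto. }
  unfold encoded_op. fold G. symmetry. apply minl_eq.
  - apply min_vertex_values; eauto.
  - intros z Hz. apply min_vertex_values in Hz as [s [Hs [Ha ->]]]; auto. apply Hupper; auto.
Qed.

End AdmissibleMasks.
End GameOf.

Theorem mainTheorem12 (n : nat) (F : (nat -> R) -> (nat -> R)) :
  (0 < n)%nat -> is_map_Rn n F -> semilinear n F -> monotone n F -> homogeneous n F ->
  exists (G : game) (p : vtx -> vtx -> R),
    g_n G = n /\ game_ok G /\ absorption_probs G p /\
    forall x v, (v < n)%nat -> F x v = encoded_op G p x v.
Proof.
  intros Hn Hmap [S HS] Hm Hh.
  destruct (affine_selection_exists n F S Hm Hh HS) as [GL [Hstoch Hsel]].
  assert (HK : (0 < length GL)%nat).
  { destruct (Hsel (fun _ => 0) 0%nat Hn) as [g [Hg _]]. destruct GL; [destruct Hg|simpl; lia]. }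
  pose proof (admissible_mask_exists n F GL Hsel (segment_bracket n F GL Hmap Hm Hh Hsel)) as Hadm.
  exists (game_of n F GL), (absorption_of GL). split; [reflexivity|]. split; [|split].
  - apply game_of_ok; auto.
  - apply game_of_absorption; auto.
  - apply game_of_encodes; auto.
Qed.
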